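(* $$\int_{0}^{1}\frac{\log(x)\,\log(\log x)\,\tanh^{-1}(x)}{x}\,dx=\frac18\Big(-7\zeta'(3)+\zeta(3)\big(-7+7\gamma-7i\pi-\log 2\big)\Big),$$ where $\gamma$ is Euler's constant and $\zeta$ the Riemann zeta function.
   Context: For $x\in(0,1)$, $\log(\log x)=\log|\log x|+i\pi$ (principal branch). *)

From Stdlib Require Import Reals.
From Coquelicot Require Import Coquelicot.
Open Scope R_scope.

Definition artanh (x : R) : R := / 2 * ln ((1 + x) / (1 - x)).

(* Principal complex logarithm of a nonzero real number t:
   Log t = ln |t| + i*Arg t, with Arg t = 0 for t > 0 and Arg t = pi for t < 0. *)
Definition clog_real (t : R) : C :=
  if Rlt_dec 0 t then (ln t, 0) else (ln (- t), PI).

Definition zeta (s : R) : R := Series (fun n : nat => / Rpower (INR (S n)) s).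

Definition zeta' (s : R) : R := Derive zeta s.

Definition euler_gamma : R :=
  real (Lim_seq (fun n : nat => sum_f_R0 (fun k => / INR (S k)) n - ln (INR (S n)))).

Definition integrand (x : R) : C :=
  Cmult (RtoC (ln x * artanh x / x)) (clog_real (ln x)).

(** The substitution x = e^{-t} turns the real and imaginary parts into
    ∫_0^∞ -t log t · A(t) dt and ∫_0^∞ -π t · A(t) dt, A(t) = artanh(e^{-t}).
    Expanding A(t) = Σ_j e^{-(2j+1)t}/(2j+1) (with an explicit remainder bound)
    and integrating term by term with
      ∫_0^∞ t e^{-kt} dt = 1/k²,   ∫_0^∞ t log t e^{-kt} dt = (1 - γ - log k)/k²
    leaves the odd Dirichlet series Σ 1/(2j+1)³ = 7/8 ζ(3) and
    Σ log(2j+1)/(2j+1)³ = -(7/8 ζ'(3) + log 2/8 ζ(3)).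
    The only transcendental input is ∫_0^∞ e^{-t} log t dt = -γ, obtained from
    the approximations (1 - t/n)^n of e^{-t}, whose log-moments are explicit. *)

From Stdlib Require Import Reals ZArith Lra Lia Psatz.
From Coquelicot Require Import Coquelicot.
Open Scope R_scope.

(** [e^t ≥ (1 + t/n)^n] for [t ≥ 0], from [e^{t/n} ≥ 1 + t/n]. *)
Lemma exp_ge_pow n t : (1 <= n)%nat -> 0 <= t -> (1 + t / INR n) ^ n <= exp t.
Proof.
  intros Hn Ht. assert (HN : 1 <= INR n) by (apply (le_INR 1) in Hn; exact Hn).
  replace (exp t) with (exp (t / INR n) ^ n).
  - apply pow_incr. split; [|apply exp_ineq1_le].
    assert (0 <= t / INR n) by (apply Rdiv_le_0_compat; lra). lra.
  - induction n as [|m _]; [lia|].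
    rewrite <- (exp_ln (exp (t / INR (S m)) ^ S m)) by (apply pow_lt, exp_pos).
    rewrite ln_pow, ln_exp by apply exp_pos. f_equal. field. lra.
Qed.

Lemma exp_neg_decay n t : (1 <= n)%nat -> 0 <= t -> exp (- t) <= INR n ^ n / (1 + t) ^ n.
Proof.
  intros Hn Ht. assert (HN : 1 <= INR n) by (apply (le_INR 1) in Hn; exact Hn).
  assert (Hpow := exp_ge_pow n t Hn Ht).
  assert (Hp : 0 < (1 + t / INR n) ^ n).
  { apply pow_lt. assert (0 <= t / INR n) by (apply Rdiv_le_0_compat; lra). lra. }
  assert (E : INR n ^ n / (INR n ^ n * (1 + t / INR n) ^ n) = / (1 + t / INR n) ^ n).
  { field. split; [lra|]. apply pow_nonzero. lra. }
  rewrite exp_Ropp. apply Rle_trans with (/ (1 + t / INR n) ^ n).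
  { apply Rinv_le_contravar; assumption. }
  rewrite <- E.
  apply Rmult_le_compat_l; [apply pow_le; lra|].
  apply Rinv_le_contravar; [apply pow_lt; lra|].
  rewrite <- Rpow_mult_distr. apply pow_incr. split; [lra|].
  replace (INR n * (1 + t / INR n)) with (INR n + t) by (field; apply Rgt_not_eq; lra). lra.
Qed.

Lemma exp_neg_decay3 t : 0 <= t -> exp (- t) <= 27 / (1 + t) ^ 3.
Proof. intros Ht. replace 27 with (INR 3 ^ 3) by (simpl; ring). apply exp_neg_decay; [lia|lra]. Qed.

Lemma exp_neg_decay4 t : 0 <= t -> exp (- t) <= 256 / (1 + t) ^ 4.
Proof. intros Ht. replace 256 with (INR 4 ^ 4) by (simpl; ring). apply exp_neg_decay; [lia|lra]. Qed.

Lemma exp_le_mono x y : x <= y -> exp x <= exp y.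
Proof. intros H. destruct (Req_dec x y) as [->|]; [lra|]. apply Rlt_le, exp_increasing; lra. Qed.

Lemma exp_neg_in_01 t : 0 < t -> 0 < exp (- t) < 1.
Proof. intros Ht. split; [apply exp_pos|]. rewrite <- exp_0. apply exp_increasing. lra. Qed.

Lemma ln_lt_self y : 0 < y -> ln y < y.
Proof.
  intros Hy. rewrite <- (ln_exp y) at 2. apply ln_increasing; [lra|].
  assert (H := exp_ineq1_le y). lra.
Qed.

(** [|log t| ≤ 2 (1+t)/√t], from [log s < s] applied to [√t] and [1/√t]. *)
Lemma abs_ln_le t : 0 < t -> Rabs (ln t) <= 2 * (1 + t) / sqrt t.
Proof.
  intros Ht. assert (Hs : 0 < sqrt t) by (apply sqrt_lt_R0; lra).
  assert (Hss : sqrt t * sqrt t = t) by (apply sqrt_sqrt; lra).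
  assert (Hl : ln t = 2 * ln (sqrt t)).
  { rewrite <- Hss at 1. rewrite ln_mult by lra. ring. }
  assert (H1 := ln_lt_self (sqrt t) Hs).
  assert (H2 := ln_lt_self (/ sqrt t) (Rinv_0_lt_compat _ Hs)).
  rewrite ln_Rinv in H2 by lra.
  assert (E : 2 * (1 + t) / sqrt t = 2 * sqrt t + 2 / sqrt t).
  { set (s := sqrt t) in *. rewrite <- Hss. field. lra. }
  rewrite E. unfold Rdiv. apply Rabs_le. split; nra.
Qed.

Lemma abs_t_ln_le t : 0 < t <= 1 -> Rabs (t * ln t) <= 2 * sqrt t.
Proof.
  intros Ht. assert (Hs : 0 < sqrt t) by (apply sqrt_lt_R0; lra).
  assert (Hss : sqrt t * sqrt t = t) by (apply sqrt_sqrt; lra).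
  assert (H2 := ln_lt_self (/ sqrt t) (Rinv_0_lt_compat _ Hs)).
  rewrite ln_Rinv in H2 by lra.
  assert (Hl : ln t = 2 * ln (sqrt t)).
  { rewrite <- Hss at 1. rewrite ln_mult by lra. ring. }
  assert (ln t <= 0) by (rewrite <- ln_1; apply ln_le; lra).
  rewrite Rabs_mult, Rabs_right, Rabs_left1 by lra.
  assert (t * / sqrt t = sqrt t) by (set (s := sqrt t) in *; rewrite <- Hss; field; lra).
  nra.
Qed.

Lemma bernoulli m x : 0 <= x <= 1 -> 1 - INR m * x <= (1 - x) ^ m.
Proof.
  intros Hx. induction m as [|m IH]; [simpl; lra|].
  rewrite S_INR. simpl. assert (0 <= INR m) by apply pos_INR.
  apply Rle_trans with ((1 - x) * (1 - INR m * x)); [nra|].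
  apply Rmult_le_compat_l; lra.
Qed.

Lemma pow_in_01 m x : 0 <= x <= 1 -> 0 <= x ^ m <= 1.
Proof. intros Hx. induction m; simpl; [lra|]. split; [apply Rmult_le_pos|]; nra. Qed.

Lemma exp_pow x m : exp x ^ m = exp (INR m * x).
Proof.
  induction m as [|m IH]; [simpl; rewrite Rmult_0_l, exp_0; ring|].
  rewrite S_INR. simpl. rewrite IH, <- exp_plus. f_equal. ring.
Qed.

Lemma INR_ge1 n : (1 <= n)%nat -> 1 <= INR n.
Proof. intros H. apply (le_INR 1) in H. exact H. Qed.

Lemma INR_odd_pos j : 0 < INR (2 * j + 1).
Proof. apply lt_0_INR. lia. Qed.

Lemma nat_beyond x : exists n : nat, x < INR n.
Proof.
  destruct (archimed (Rabs x)) as [H1 _].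
  exists (Z.to_nat (up (Rabs x))). rewrite INR_IZR_INZ, Z2Nat.id.
  - assert (Hx := Rle_abs x). lra.
  - apply le_IZR. assert (Hx := Rabs_pos x). lra.
Qed.

Lemma inv_eventually_small C eps : 0 < eps -> exists b, 1 <= b /\ forall x, b <= x -> C / x < eps.
Proof.
  intros He. exists (Rmax 1 (Rabs C / eps + 2)). split; [apply Rmax_l|]. intros x Hx.
  assert (1 <= x) by (eapply Rle_trans; [apply Rmax_l|apply Hx]).
  assert (Rabs C / eps + 2 <= x) by (eapply Rle_trans; [apply Rmax_r|apply Hx]).
  apply Rle_lt_trans with (Rabs C / x).
  { unfold Rdiv. apply Rmult_le_compat_r; [left; apply Rinv_0_lt_compat; lra|apply Rle_abs]. }
  apply (Rmult_lt_reg_r x); [lra|]. unfold Rdiv. rewrite Rmult_assoc, Rinv_l, Rmult_1_r by lra.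
  assert (Rabs C < eps * (x - 1)).
  { apply (Rmult_lt_reg_r (/ eps)); [apply Rinv_0_lt_compat; lra|].
    replace (eps * (x - 1) * / eps) with (x - 1) by (field; lra). unfold Rdiv in *. lra. }
  nra.
Qed.

Lemma RInt_derive (f df : R -> R) a b :
  (forall x, Rmin a b <= x <= Rmax a b -> is_derive f x (df x)) ->
  (forall x, Rmin a b <= x <= Rmax a b -> continuous df x) ->
  RInt df a b = f b - f a.
Proof. intros Hd Hc. apply is_RInt_unique. exact (is_RInt_derive f df a b Hd Hc). Qed.

Lemma ex_RInt_cont (f : R -> R) a b :
  (forall x, Rmin a b <= x <= Rmax a b -> continuous f x) -> ex_RInt f a b.
Proof. intros; apply (ex_RInt_continuous (V := R_CompleteNormedModule)); auto. Qed.

(** The weight [1/(√t (1+t))] has primitive [2 atan √t], hence total mass [π]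
    on [(0,∞)]; every integrand dominated by [C] times it has integral [≤ C π]. *)
Lemma RInt_weight a b : 0 < a <= b ->
  RInt (fun t => / (sqrt t * (1 + t))) a b = 2 * atan (sqrt b) - 2 * atan (sqrt a).
Proof.
  intros Hab. apply (RInt_derive (fun t => 2 * atan (sqrt t)));
    rewrite Rmin_left, Rmax_right by lra; intros x Hx;
    assert (Hs : 0 < sqrt x) by (apply sqrt_lt_R0; lra).
  - auto_derive; [lra|]. rewrite Rmult_1_r, sqrt_sqrt by lra. field. split; lra.
  - apply (ex_derive_continuous (fun t => / (sqrt t * (1 + t)))). auto_derive.
    repeat split; try lra. nra.
Qed.

Lemma atan_sqrt_diff_le a b : 0 < a <= b -> 0 <= atan (sqrt b) - atan (sqrt a) <= PI / 2.
Proof.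
  intros H. assert (Ha : 0 <= sqrt a) by apply sqrt_pos.
  assert (Hab : sqrt a <= sqrt b) by (apply sqrt_le_1_alt; lra).
  assert (Hmono : forall x y, x <= y -> atan x <= atan y).
  { intros x y Hxy. destruct (Req_dec x y) as [->|]; [lra|]. apply Rlt_le, atan_increasing; lra. }
  assert (H0 := Hmono 0 (sqrt a) Ha). rewrite atan_0 in H0.
  assert (H1 := Hmono _ _ Hab). destruct (atan_bound (sqrt b)). lra.
Qed.

Lemma RInt_weight_bound (g : R -> R) C a b : 0 <= C -> 0 < a <= b ->
  (forall t, a <= t <= b -> continuous g t) ->
  (forall t, a <= t <= b -> Rabs (g t) <= C / (sqrt t * (1 + t))) ->
  Rabs (RInt g a b) <= C * PI.
Proof.
  intros HC Hab Hc Hb.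
  assert (Hw : forall t, Rmin a b <= t <= Rmax a b ->
                 continuous (fun t => / (sqrt t * (1 + t))) t).
  { rewrite Rmin_left, Rmax_right by lra. intros t Ht.
    assert (Hs : 0 < sqrt t) by (apply sqrt_lt_R0; lra).
    apply (ex_derive_continuous (fun t => / (sqrt t * (1 + t)))). auto_derive.
    repeat split; try lra. nra. }
  assert (E : RInt (fun t => C / (sqrt t * (1 + t))) a b
              = C * (2 * atan (sqrt b) - 2 * atan (sqrt a))).
  { rewrite <- RInt_weight by lra. apply (RInt_scal (fun t => / (sqrt t * (1 + t)))).
    apply ex_RInt_cont. exact Hw. }
  eapply Rle_trans.
  { apply abs_RInt_le; [lra|]. apply ex_RInt_cont. rewrite Rmin_left, Rmax_right by lra. auto. }
  apply Rle_trans with (RInt (fun t => C / (sqrt t * (1 + t))) a b).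
  - apply RInt_le; [lra| | |intros; apply Hb; lra]; apply ex_RInt_cont.
    + rewrite Rmin_left, Rmax_right by lra. intros; apply continuous_Rabs_comp; auto.
    + intros t Ht. apply (continuous_mult (fun _ => C)); [apply continuous_const|auto].
  - rewrite E. destruct (atan_sqrt_diff_le a b Hab). nra.
Qed.

(** ** Improper integrals over [(0,∞)] *)

Definition cont_pos (f : R -> R) : Prop := forall t, 0 < t -> continuous f t.

Definition int_0_oo (f : R -> R) (l : R) : Prop :=
  forall eps, 0 < eps -> exists d, 0 < d /\ exists M, forall a b,
    0 < a < d -> M < b -> Rabs (RInt f a b - l) < eps.

Lemma cont_pos_derivable (f : R -> R) : (forall t, 0 < t -> ex_derive f t) -> cont_pos f.
Proof. intros H t Ht. apply (ex_derive_continuous (V := R_NormedModule)). auto. Qed.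

Lemma cont_pos_mult f g : cont_pos f -> cont_pos g -> cont_pos (fun t => f t * g t).
Proof. intros Hf Hg t Ht. apply (continuous_mult f g); auto. Qed.

Lemma cont_pos_plus f g : cont_pos f -> cont_pos g -> cont_pos (fun t => f t + g t).
Proof. intros Hf Hg t Ht. apply (continuous_plus f g); auto. Qed.

Lemma cont_pos_minus f g : cont_pos f -> cont_pos g -> cont_pos (fun t => f t - g t).
Proof. intros Hf Hg t Ht. apply (continuous_minus f g); auto. Qed.

Lemma cont_pos_sum (g : nat -> R -> R) n :
  (forall j, cont_pos (g j)) -> cont_pos (fun t => sum_f_R0 (fun j => g j t) n).
Proof.
  intros H. induction n as [|n IH]; [apply H|].
  apply (cont_pos_plus (fun t => sum_f_R0 (fun j => g j t) n) (g (S n))); auto.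
Qed.

Lemma ex_RInt_pos f a b : cont_pos f -> 0 < a -> 0 < b -> ex_RInt f a b.
Proof.
  intros Hf Ha Hb. apply ex_RInt_cont. intros x Hx. apply Hf.
  assert (0 < Rmin a b) by (apply Rmin_glb_lt; auto). lra.
Qed.

(** The thresholds may always be taken with [d ≤ 1 ≤ M], so that [a < b]. *)
Lemma int_0_oo_normal f l : int_0_oo f l -> forall eps, 0 < eps ->
  exists d, 0 < d <= 1 /\ exists M, 1 <= M /\
    forall a b, 0 < a < d -> M < b -> Rabs (RInt f a b - l) < eps.
Proof.
  intros H eps He. destruct (H eps He) as [d [Hd [M HM]]].
  exists (Rmin d 1). split; [split; [apply Rmin_glb_lt; lra|apply Rmin_r]|].
  exists (Rmax M 1). split; [apply Rmax_r|]. intros a b Ha Hb. apply HM.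
  - split; [lra|]. eapply Rlt_le_trans; [apply Ha|apply Rmin_l].
  - eapply Rle_lt_trans; [apply Rmax_l|apply Hb].
Qed.

Lemma int_0_oo_congr f g l1 l2 :
  (forall t, 0 < t -> f t = g t) -> l1 = l2 -> int_0_oo f l1 -> int_0_oo g l2.
Proof.
  intros E <- H eps He. destruct (int_0_oo_normal f l1 H eps He) as [d [Hd [M [HM HdM]]]].
  exists d. split; [lra|]. exists M. intros a b Ha Hb.
  rewrite <- (RInt_ext f); [apply HdM; auto|].
  intros x Hx. apply E. assert (0 < Rmin a b) by (apply Rmin_glb_lt; lra). lra.
Qed.

Lemma int_0_oo_plus f g lf lg : cont_pos f -> cont_pos g ->
  int_0_oo f lf -> int_0_oo g lg -> int_0_oo (fun t => f t + g t) (lf + lg).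
Proof.
  intros Cf Cg Hf Hg eps He.
  destruct (int_0_oo_normal _ _ Hf (eps / 2)) as [d1 [Hd1 [M1 [HM1 H1]]]]; [lra|].
  destruct (int_0_oo_normal _ _ Hg (eps / 2)) as [d2 [Hd2 [M2 [HM2 H2]]]]; [lra|].
  exists (Rmin d1 d2). split; [apply Rmin_glb_lt; lra|].
  exists (Rmax M1 M2). intros a b Ha Hb.
  assert (a < d1) by (eapply Rlt_le_trans; [apply Ha|apply Rmin_l]).
  assert (a < d2) by (eapply Rlt_le_trans; [apply Ha|apply Rmin_r]).
  assert (M1 < b) by (eapply Rle_lt_trans; [apply Rmax_l|apply Hb]).
  assert (M2 < b) by (eapply Rle_lt_trans; [apply Rmax_r|apply Hb]).
  rewrite (RInt_plus f g) by (apply ex_RInt_pos; auto; lra).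
  assert (Ef := H1 a b ltac:(lra) ltac:(lra)). assert (Eg := H2 a b ltac:(lra) ltac:(lra)).
  change (plus (RInt f a b) (RInt g a b)) with (RInt f a b + RInt g a b).
  replace (RInt f a b + RInt g a b - (lf + lg)) with ((RInt f a b - lf) + (RInt g a b - lg)) by ring.
  eapply Rle_lt_trans; [apply Rabs_triang|lra].
Qed.

Lemma int_0_oo_scal f c l : cont_pos f -> int_0_oo f l -> int_0_oo (fun t => c * f t) (c * l).
Proof.
  intros Cf Hf eps He. assert (Hc := Rabs_pos c).
  destruct (int_0_oo_normal _ _ Hf (eps / (Rabs c + 1))) as [d [Hd [M [HM H]]]].
  { apply Rdiv_lt_0_compat; lra. }
  exists d. split; [lra|]. exists M. intros a b Ha Hb.
  assert (E : RInt (fun t => c * f t) a b = c * RInt f a b).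
  { apply (RInt_scal f a b c). apply ex_RInt_pos; auto; lra. }
  rewrite E.
  replace (c * RInt f a b - c * l) with (c * (RInt f a b - l)) by ring.
  rewrite Rabs_mult. assert (Hx := H a b Ha Hb).
  apply Rle_lt_trans with (Rabs c * (eps / (Rabs c + 1))); [apply Rmult_le_compat_l; lra|].
  apply Rlt_le_trans with ((Rabs c + 1) * (eps / (Rabs c + 1))).
  - apply Rmult_lt_compat_r; [apply Rdiv_lt_0_compat|]; lra.
  - right. field. lra.
Qed.

Lemma int_0_oo_sum (g : nat -> R -> R) (l : nat -> R) n :
  (forall j, cont_pos (g j)) -> (forall j, int_0_oo (g j) (l j)) ->
  int_0_oo (fun t => sum_f_R0 (fun j => g j t) n) (sum_f_R0 l n).
Proof.
  intros Hc Hl. induction n as [|n IH]; [apply Hl|].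
  apply (int_0_oo_plus (fun t => sum_f_R0 (fun j => g j t) n) (g (S n))); auto.
  apply cont_pos_sum; auto.
Qed.

Lemma cont_pos_dilate f k : 0 < k -> cont_pos f -> cont_pos (fun t => f (k * t)).
Proof.
  intros Hk Cf t Ht. apply (continuous_comp (fun t => k * t) f); [|apply Cf; nra].
  apply (ex_derive_continuous (fun t => k * t)). auto_derive. auto.
Qed.

Lemma int_0_oo_dilate f k l : 0 < k -> cont_pos f -> int_0_oo f l ->
  int_0_oo (fun t => f (k * t)) (l / k).
Proof.
  intros Hk Cf H eps He.
  destruct (int_0_oo_normal _ _ H (eps * k)) as [d [Hd [M [HM HH]]]]; [nra|].
  exists (d / k). split; [apply Rdiv_lt_0_compat; lra|]. exists (M / k). intros a b Ha Hb.
  assert (Hka : 0 < k * a < d).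
  { split; [nra|]. assert (H1 := Rmult_lt_compat_l k a (d / k) Hk (proj2 Ha)).
    replace (k * (d / k)) with d in H1 by (field; lra). lra. }
  assert (Hkb : M < k * b).
  { apply (Rmult_lt_compat_l k) in Hb; [|lra]. replace (k * (M / k)) with M in Hb by (field; lra). lra. }
  assert (E : RInt (fun t => f (k * t)) a b = RInt f (k * a) (k * b) / k).
  { assert (E1 := RInt_comp_lin f k 0 a b). rewrite !Rplus_0_r in E1.
    rewrite <- E1 by (apply ex_RInt_pos; auto; nra).
    assert (Hex : ex_RInt (fun t => f (k * t)) a b)
      by (apply ex_RInt_pos; [apply cont_pos_dilate; auto|nra|nra]).
    rewrite (RInt_ext (fun y => scal k (f (k * y + 0))) (fun y => k * f (k * y)))
      by (intros; rewrite Rplus_0_r; reflexivity).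
    assert (E2 : RInt (fun y => k * f (k * y)) a b = k * RInt (fun y => f (k * y)) a b)
      by exact (RInt_scal (fun y => f (k * y)) a b k Hex).
    rewrite E2. unfold Rdiv. rewrite Rmult_comm, <- Rmult_assoc, Rinv_l, Rmult_1_l by lra.
    reflexivity. }
  rewrite E. replace (RInt f (k * a) (k * b) / k - l / k) with ((RInt f (k * a) (k * b) - l) / k) by (field; lra).
  unfold Rdiv. rewrite Rabs_mult, (Rabs_right (/ k)) by (apply Rle_ge, Rlt_le, Rinv_0_lt_compat; lra).
  apply (Rmult_lt_reg_r k); [lra|]. rewrite Rmult_assoc, Rinv_l, Rmult_1_r by lra. apply HH; lra.
Qed.

Definition lim_at_0 (F : R -> R) (l : R) : Prop :=
  forall eps, 0 < eps -> exists d, 0 < d /\ forall a, 0 < a < d -> Rabs (F a - l) < eps.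

Definition lim_at_oo (F : R -> R) (l : R) : Prop :=
  forall eps, 0 < eps -> exists M, forall b, M < b -> Rabs (F b - l) < eps.

Lemma lim_at_0_continuous F : continuous F 0 -> lim_at_0 F (F 0).
Proof.
  intros H eps He. destruct (proj1 (filterlim_locally F (F 0)) H (mkposreal eps He)) as [d Hd].
  exists d. split; [apply cond_pos|]. intros a Ha. apply (Hd a).
  change (Rabs (a - 0) < d). rewrite Rminus_0_r, Rabs_right; lra.
Qed.

Lemma lim_at_0_sqrt_rate F l C : 0 <= C ->
  (forall a, 0 < a < 1 -> Rabs (F a - l) <= C * sqrt a) -> lim_at_0 F l.
Proof.
  intros HC H eps He. set (e := eps / (C + 1)).
  assert (He' : 0 < e) by (apply Rdiv_lt_0_compat; lra).
  exists (Rmin 1 (e * e)). split; [apply Rmin_glb_lt; nra|].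
  intros a Ha. assert (a < 1) by (eapply Rlt_le_trans; [apply Ha|apply Rmin_l]).
  assert (a < e * e) by (eapply Rlt_le_trans; [apply Ha|apply Rmin_r]).
  eapply Rle_lt_trans; [apply H; lra|].
  assert (sqrt a < e) by (rewrite <- (sqrt_square e) by lra; apply sqrt_lt_1_alt; lra).
  assert (Hs := sqrt_pos a).
  apply Rle_lt_trans with (C * e); [apply Rmult_le_compat_l; lra|].
  apply Rlt_le_trans with ((C + 1) * e); [apply Rmult_lt_compat_r; lra|].
  right. unfold e. field. lra.
Qed.

Lemma lim_at_oo_inv_rate F l C : 0 <= C ->
  (forall b, 1 <= b -> Rabs (F b - l) <= C / b) -> lim_at_oo F l.
Proof.
  intros HC H eps He. destruct (inv_eventually_small C eps He) as [M [HM HMe]].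
  exists M. intros b Hb. eapply Rle_lt_trans; [apply H; lra|]. apply HMe. lra.
Qed.

Lemma int_0_oo_primitive f F LA LB : cont_pos f ->
  (forall t, 0 < t -> is_derive F t (f t)) -> lim_at_0 F LA -> lim_at_oo F LB ->
  int_0_oo f (LB - LA).
Proof.
  intros Cf HD HA HB eps He.
  destruct (HA (eps / 2)) as [d [Hd Hd']]; [lra|].
  destruct (HB (eps / 2)) as [M HM]; [lra|].
  exists (Rmin d 1). split; [apply Rmin_glb_lt; lra|]. exists (Rmax M 1). intros a b Ha Hb.
  assert (a < d) by (eapply Rlt_le_trans; [apply Ha|apply Rmin_l]).
  assert (a < 1) by (eapply Rlt_le_trans; [apply Ha|apply Rmin_r]).
  assert (M < b) by (eapply Rle_lt_trans; [apply Rmax_l|apply Hb]).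
  assert (1 < b) by (eapply Rle_lt_trans; [apply Rmax_r|apply Hb]).
  rewrite (RInt_derive F f); rewrite ?Rmin_left, ?Rmax_right by lra.
  - replace (F b - F a - (LB - LA)) with ((F b - LB) - (F a - LA)) by ring.
    eapply Rle_lt_trans; [apply Rabs_triang|]. rewrite Rabs_Ropp.
    assert (Ea := Hd' a ltac:(lra)). assert (Eb := HM b ltac:(lra)). lra.
  - intros x Hx. apply HD. lra.
  - intros x Hx. apply Cf. lra.
Qed.

Lemma int_0_oo_approx f (fn : nat -> R -> R) (ls : nat -> R) (es : nat -> R) l :
  cont_pos f -> (forall n, cont_pos (fn n)) -> (forall n, int_0_oo (fn n) (ls n)) ->
  Un_cv ls l -> Un_cv es 0 ->
  (forall n a b, 0 < a <= b -> Rabs (RInt (fun t => f t - fn n t) a b) <= es n) ->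
  int_0_oo f l.
Proof.
  intros Cf Cn Hn Hl He Hrem eps Heps.
  destruct (Hl (eps / 3)) as [N1 HN1]; [lra|].
  destruct (He (eps / 3)) as [N2 HN2]; [lra|].
  set (n := max N1 N2).
  assert (Ln := HN1 n ltac:(unfold n; lia)). assert (En := HN2 n ltac:(unfold n; lia)).
  unfold R_dist in Ln, En. rewrite Rminus_0_r in En.
  destruct (int_0_oo_normal _ _ (Hn n) (eps / 3)) as [d [Hd [M [HM HdM]]]]; [lra|].
  exists d. split; [lra|]. exists M. intros a b Ha Hb.
  assert (Split : RInt f a b = RInt (fn n) a b + RInt (fun t => f t - fn n t) a b).
  { rewrite <- (RInt_plus (fn n) (fun t => f t - fn n t))
      by (apply ex_RInt_pos; try apply cont_pos_minus; auto; lra).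
    apply RInt_ext. intros. change (plus ?u ?v) with (u + v). simpl. ring. }
  rewrite Split.
  replace (RInt (fn n) a b + RInt (fun t => f t - fn n t) a b - l)
    with ((RInt (fn n) a b - ls n) + (ls n - l) + RInt (fun t => f t - fn n t) a b) by ring.
  assert (H1 := HdM a b Ha Hb). assert (H2 := Hrem n a b ltac:(lra)).
  assert (H3 := Rle_abs (es n)).
  eapply Rle_lt_trans; [apply Rabs_triang|].
  eapply Rle_lt_trans; [apply Rplus_le_compat_r, Rabs_triang|]. lra.
Qed.

Lemma sq_exp_decay b : 0 < b -> (1 + b) ^ 2 * exp (- b) <= 27 / b.
Proof.
  intros Hb. assert (H := exp_neg_decay3 b ltac:(lra)).
  apply Rle_trans with ((1 + b) ^ 2 * (27 / (1 + b) ^ 3)).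
  { apply Rmult_le_compat_l; [apply pow_le; lra|exact H]. }
  replace ((1 + b) ^ 2 * (27 / (1 + b) ^ 3)) with (27 / (1 + b)) by (field; lra).
  apply Rmult_le_compat_l; [lra|]. apply Rinv_le_contravar; lra.
Qed.

Lemma int_exp : int_0_oo (fun t => exp (- t)) 1.
Proof.
  replace 1 with (0 - (-1)) by ring.
  apply (int_0_oo_primitive _ (fun t => - exp (- t))).
  - apply cont_pos_derivable. intros; auto_derive; auto.
  - intros t _. auto_derive; auto. ring.
  - replace (-1) with (- exp (- 0)) by (rewrite Ropp_0, exp_0; ring).
    apply (lim_at_0_continuous (fun t => - exp (- t))).
    apply (ex_derive_continuous (fun t => - exp (- t))). auto_derive. auto.
  - apply (lim_at_oo_inv_rate _ _ 27); [lra|]. intros b Hb.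
    rewrite Rminus_0_r, Rabs_Ropp, Rabs_right by (apply Rle_ge, Rlt_le, exp_pos).
    eapply Rle_trans; [|apply sq_exp_decay; lra].
    assert (Hp := exp_pos (- b)). nra.
Qed.

Lemma int_t_exp : int_0_oo (fun t => t * exp (- t)) 1.
Proof.
  replace 1 with (0 - (-1)) by ring.
  apply (int_0_oo_primitive _ (fun t => - (t + 1) * exp (- t))).
  - apply cont_pos_derivable. intros; auto_derive; auto.
  - intros t _. auto_derive; auto. ring.
  - replace (-1) with (- (0 + 1) * exp (- 0)) by (rewrite Ropp_0, exp_0; ring).
    apply (lim_at_0_continuous (fun t => - (t + 1) * exp (- t))).
    apply (ex_derive_continuous (fun t => - (t + 1) * exp (- t))). auto_derive. auto.
  - apply (lim_at_oo_inv_rate _ _ 27); [lra|]. intros b Hb.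
    assert (Hp := exp_pos (- b)).
    rewrite Rminus_0_r, Rabs_left1 by nra.
    eapply Rle_trans; [|apply sq_exp_decay; lra]. nra.
Qed.

(** Integration by parts for [∫ t log t e^{-t}]: the derivative of the
    boundary term [-t log t e^{-t}] integrates to [0]. *)
Lemma int_by_parts_boundary :
  int_0_oo (fun t => t * ln t * exp (- t) - (ln t + 1) * exp (- t)) 0.
Proof.
  replace 0 with (0 - 0) by ring.
  apply (int_0_oo_primitive _ (fun t => - (t * ln t * exp (- t)))).
  - apply cont_pos_derivable. intros; auto_derive; lra.
  - intros t Ht. auto_derive; [lra|]. field. lra.
  - apply (lim_at_0_sqrt_rate _ _ 2); [lra|]. intros a Ha.
    rewrite Rminus_0_r, Rabs_Ropp, Rabs_mult.
    assert (H1 := abs_t_ln_le a ltac:(lra)).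
    assert (H2 : Rabs (exp (- a)) <= 1).
    { rewrite Rabs_right by (apply Rle_ge, Rlt_le, exp_pos).
      rewrite <- exp_0. apply exp_le_mono. lra. }
    assert (H3 := Rabs_pos (exp (- a))). assert (H4 := Rabs_pos (a * ln a)). nra.
  - apply (lim_at_oo_inv_rate _ _ 27); [lra|]. intros b Hb.
    rewrite Rminus_0_r, Rabs_Ropp.
    assert (0 <= ln b) by (rewrite <- ln_1; apply ln_le; lra).
    assert (ln b < b) by (apply ln_lt_self; lra). assert (Hp := exp_pos (- b)).
    rewrite Rabs_right by (apply Rle_ge; repeat apply Rmult_le_pos; lra).
    eapply Rle_trans; [|apply sq_exp_decay; lra]. apply Rmult_le_compat_r; nra.
Qed.

(** ** Euler's constant: [∫_0^∞ e^{-t} log t dt = -γ]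

    On [[0,n]], [P_n(t) = (1 - t/n)^n] approximates [e^{-t}] within
    [t² e^{-t}/n], and [P_n(t) log t] has the explicit primitive [Ψ_n] below.
    Hence [∫_a^b e^{-t} log t] is within [O(√a + 1/n + 1/b)] of
    [G_n = n/(n+1) (log n - H_{n+1})]; so [G_n] converges, to the value of the
    integral, and comparing with the definition of [γ] gives the limit [-γ]. *)

(** Coquelicot's generic operations may leave an equality typed in a normed
    module carrier; [as_real_eq] restates it in [R] so that [field] applies. *)
Ltac as_real_eq := cbv beta; match goal with |- ?a = ?b => change (@eq R a b) end.

Lemma sum_scal_l (f : nat -> R) c n : sum_f_R0 (fun j => c * f j) n = c * sum_f_R0 f n.
Proof. induction n as [|n IH]; simpl; [ring|rewrite IH; ring]. Qed.

Lemma is_derive_sum (g dg : nat -> R -> R) n t :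
  (forall j, is_derive (g j) t (dg j t)) ->
  is_derive (fun t => sum_f_R0 (fun j => g j t) n) t (sum_f_R0 (fun j => dg j t) n).
Proof.
  intros H. induction n as [|n IH]; [apply H|].
  apply (is_derive_plus (fun t => sum_f_R0 (fun j => g j t) n) (g (S n))); auto.
Qed.

Definition exp_approx (n : nat) (t : R) : R := (1 - t / INR n) ^ n.
Definition harmonic (n : nat) : R := sum_f_R0 (fun k => / INR (S k)) n.
Definition gamma_seq (n : nat) : R := INR n / (INR n + 1) * (ln (INR n) - harmonic n).
Definition gamma_integrand (t : R) : R := exp (- t) * ln t.

Lemma exp_approx_bounds n t : (1 <= n)%nat -> 0 <= t <= INR n ->
  0 <= exp_approx n t <= exp (- t) /\
  exp (- t) - exp_approx n t <= t * t * exp (- t) / INR n.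
Proof.
  intros Hn Ht. assert (HN := INR_ge1 n Hn). set (N := INR n) in *.
  set (x := t / N). assert (Hx : 0 <= x <= 1).
  { unfold x. split; [apply Rdiv_le_0_compat; lra|]. apply (Rmult_le_reg_r N); [lra|].
    unfold Rdiv. rewrite Rmult_assoc, Rinv_l; lra. }
  assert (Et : t = N * x) by (unfold x; field; lra).
  unfold exp_approx. fold N x.
  assert (E1 : exp (- t) = exp (- x) ^ n) by (rewrite exp_pow; f_equal; fold N; rewrite Et; ring).
  assert (H1 : 1 - x <= exp (- x)) by (assert (H := exp_ineq1_le (- x)); lra).
  split; [split; [apply pow_le; lra|rewrite E1; apply pow_incr; lra]|].
  (* (1-x)^n e^{nx} ≥ (1-x²)^n ≥ 1 - n x² *)
  assert (H2 : 1 + x <= exp x) by apply exp_ineq1_le.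
  assert (H4 : 1 - INR n * (x * x) <= (1 - x * x) ^ n) by (apply bernoulli; nra).
  assert (H5 : (1 - x * x) ^ n <= ((1 - x) * exp x) ^ n) by (apply pow_incr; nra).
  rewrite Rpow_mult_distr, exp_pow in H5. fold N in H4, H5.
  replace (N * x) with t in H5 by lra.
  assert (Hp := exp_pos (- t)).
  assert (E3 : exp t * exp (- t) = 1) by (rewrite <- exp_plus, Rplus_opp_r; apply exp_0).
  replace (t * t * exp (- t) / N) with (N * (x * x) * exp (- t)) by (rewrite Et; field; lra).
  assert (H6 : (1 - N * (x * x)) * exp (- t) <= (1 - x) ^ n * exp t * exp (- t))
    by (apply Rmult_le_compat_r; lra).
  rewrite Rmult_assoc, E3, Rmult_1_r in H6. nra.
Qed.

(** The primitive [Ψ_n(t) = U_n(t) log t + n/(n+1) S_n(t)] of [P_n(t) log t]. *)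
Definition psi_U (n : nat) (t : R) : R := INR n / (INR n + 1) * (1 - (1 - t / INR n) ^ (S n)).
Definition psi_S (n : nat) (t : R) : R :=
  sum_f_R0 (fun j => (1 - t / INR n) ^ (S j) / INR (S j)) n.
Definition psi (n : nat) (t : R) : R := psi_U n t * ln t + INR n / (INR n + 1) * psi_S n t.

(** [Ψ_n' = P_n log], using the geometric sum [Σ_{j≤n} (1-t/n)^j]. *)
Lemma psi_derive n t : (1 <= n)%nat -> 0 < t -> is_derive (psi n) t (exp_approx n t * ln t).
Proof.
  intros Hn Ht. assert (HN := INR_ge1 n Hn).
  assert (D1 : is_derive (fun t => psi_U n t * ln t) t
     (INR n / (INR n + 1) * ((INR n + 1) * (1 - t / INR n) ^ n / INR n) * ln t + psi_U n t / t)).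
  { unfold psi_U. auto_derive; [lra|]. destruct n as [|m]; [lia|]. cbv iota beta.
    set (N := INR (S m)) in *. change ((1 - t / N) ^ S (S m)) with ((1 - t / N) * (1 - t / N) ^ (S m)).
    unfold Rminus, Rdiv. set (X := (1 + - (t * / N)) ^ S m). field. lra. }
  assert (D2 : is_derive (psi_S n) t (sum_f_R0 (fun j => - / INR n * (1 - t / INR n) ^ j) n)).
  { apply (is_derive_sum (fun j t => (1 - t / INR n) ^ S j / INR (S j))
                         (fun j t => - / INR n * (1 - t / INR n) ^ j)).
    intros j. auto_derive; [lra|].
    change (match j with 0%nat => 1 | S _ => INR j + 1 end) with (INR (S j)).
    assert (0 < INR (S j)) by (apply lt_0_INR; lia). unfold Rminus, Rdiv. field. lra. }
  assert (D := is_derive_plus _ _ t _ _ D1 (is_derive_scal _ _ (INR n / (INR n + 1)) _ D2)).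
  eapply is_derive_ext; [intros; reflexivity|]. unfold psi.
  match type of D with is_derive _ _ ?v => replace (exp_approx n t * ln t) with v; [exact D|] end.
  change (plus ?a ?b) with (a + b). change (scal ?a ?b) with (a * b). as_real_eq.
  rewrite (sum_scal_l (fun j => (1 - t / INR n) ^ j)), tech3.
  2: { intro E. assert (t / INR n = 0) by lra. assert (t = t / INR n * INR n) by (field; lra). nra. }
  unfold psi_U, exp_approx. set (N := INR n) in *.
  change ((1 - t / N) ^ S n) with ((1 - t / N) * (1 - t / N) ^ n).
  unfold Rminus, Rdiv. set (X := (1 + - (t * / N)) ^ n). clearbody X N. field. repeat split; lra.
Qed.

Lemma psi_at_n n : (1 <= n)%nat -> psi n (INR n) = INR n / (INR n + 1) * ln (INR n).
Proof.
  intros Hn. assert (HN := INR_ge1 n Hn). unfold psi, psi_U, psi_S.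
  replace (1 - INR n / INR n) with 0 by (field; lra).
  rewrite (sum_eq _ (fun _ => 0)) by (intros i _; simpl; unfold Rdiv; ring).
  rewrite sum_cte. simpl. ring.
Qed.

Lemma cont_exp_approx_ln n : cont_pos (fun t => exp_approx n t * ln t).
Proof. apply cont_pos_derivable. intros t Ht. unfold exp_approx. auto_derive. lra. Qed.

(** Both parts of [Ψ_n] are controlled through [x = a/n] and Bernoulli's
    inequality: [0 ≤ U_n(a) ≤ a] and [|S_n(a) - H_{n+1}| ≤ 2a]. *)
Lemma psi_U_bounds n a : (1 <= n)%nat -> 0 < a <= INR n -> 0 <= psi_U n a <= a.
Proof.
  intros Hn Ha. assert (HN := INR_ge1 n Hn). unfold psi_U.
  set (N := INR n) in *. set (x := a / N).
  assert (Hx : 0 <= x <= 1).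
  { unfold x. split; [apply Rdiv_le_0_compat; lra|]. apply (Rmult_le_reg_r N); [lra|].
    unfold Rdiv. rewrite Rmult_assoc, Rinv_l; lra. }
  assert (B := bernoulli (S n) x Hx). rewrite S_INR in B. fold N in B.
  assert (B2 := pow_in_01 (S n) (1 - x) ltac:(lra)).
  assert (HNN : 0 < N / (N + 1)) by (apply Rdiv_lt_0_compat; lra).
  split; [apply Rmult_le_pos; lra|].
  apply Rle_trans with (N / (N + 1) * ((N + 1) * x)); [apply Rmult_le_compat_l; lra|].
  right. unfold x. field. lra.
Qed.

Lemma psi_S_harmonic n a : (1 <= n)%nat -> 0 < a <= INR n ->
  Rabs (psi_S n a - harmonic n) <= 2 * a.
Proof.
  intros Hn Ha. assert (HN := INR_ge1 n Hn). unfold psi_S, harmonic.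
  set (N := INR n) in *. set (x := a / N).
  assert (Hx : 0 <= x <= 1).
  { unfold x. split; [apply Rdiv_le_0_compat; lra|]. apply (Rmult_le_reg_r N); [lra|].
    unfold Rdiv. rewrite Rmult_assoc, Rinv_l; lra. }
  rewrite <- minus_sum. eapply Rle_trans; [apply Rsum_abs|].
  eapply Rle_trans; [apply (sum_Rle _ (fun _ => x))|].
  - intros j _. assert (0 < INR (S j)) by (apply lt_0_INR; lia).
    replace ((1 - x) ^ S j / INR (S j) - / INR (S j)) with (- ((1 - (1 - x) ^ S j) / INR (S j)))
      by (field; lra).
    rewrite Rabs_Ropp. assert (B := bernoulli (S j) x Hx).
    assert (B2 := pow_in_01 (S j) (1 - x) ltac:(lra)).
    rewrite Rabs_right by (apply Rle_ge, Rdiv_le_0_compat; lra).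
    apply (Rmult_le_reg_r (INR (S j))); [lra|]. unfold Rdiv. rewrite Rmult_assoc, Rinv_l by lra. lra.
  - rewrite sum_cte, S_INR. fold N. replace (x * (N + 1)) with (a + a / N) by (unfold x; field; lra).
    assert (a / N <= a) by (apply (Rmult_le_reg_r N); [lra|]; unfold Rdiv; rewrite Rmult_assoc, Rinv_l; nra).
    lra.
Qed.

Lemma RInt_exp_approx_ln n a : (1 <= n)%nat -> 0 < a <= 1 -> a <= INR n ->
  Rabs (RInt (fun t => exp_approx n t * ln t) a (INR n) - gamma_seq n) <= 2 * sqrt a + 2 * a.
Proof.
  intros Hn Ha HaN. assert (HN := INR_ge1 n Hn).
  rewrite (RInt_derive (psi n)); rewrite ?Rmin_left, ?Rmax_right by lra;
    [|intros; apply psi_derive; auto; lra|intros; apply cont_exp_approx_ln; lra].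
  rewrite psi_at_n by auto.
  assert (HU := psi_U_bounds n a Hn ltac:(lra)). assert (HS := psi_S_harmonic n a Hn ltac:(lra)).
  set (N := INR n) in *.
  assert (HNN : 0 < N / (N + 1) <= 1).
  { split; [apply Rdiv_lt_0_compat; lra|]. apply (Rmult_le_reg_r (N + 1)); [lra|].
    unfold Rdiv. rewrite Rmult_assoc, Rinv_l; lra. }
  replace (N / (N + 1) * ln N - psi n a - gamma_seq n) with
    (- (psi_U n a * ln a) - N / (N + 1) * (psi_S n a - harmonic n)) by (unfold gamma_seq, psi; fold N; ring).
  eapply Rle_trans; [apply Rabs_triang|]. rewrite !Rabs_Ropp, !Rabs_mult.
  assert (H1 := abs_t_ln_le a Ha). rewrite Rabs_mult, (Rabs_right a) in H1 by lra.
  assert (Hl := Rabs_pos (ln a)).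
  rewrite (Rabs_right (psi_U n a)), (Rabs_right (N / (N + 1))) by lra.
  assert (psi_U n a * Rabs (ln a) <= a * Rabs (ln a)) by (apply Rmult_le_compat_r; lra).
  assert (N / (N + 1) * Rabs (psi_S n a - harmonic n) <= 1 * (2 * a))
    by (apply Rmult_le_compat; try lra; apply Rabs_pos).
  lra.
Qed.

Lemma exp_approx_error_le n t : (1 <= n)%nat -> 0 < t <= INR n ->
  Rabs ((exp (- t) - exp_approx n t) * ln t) <= (512 / INR n) / (sqrt t * (1 + t)).
Proof.
  intros Hn Ht. assert (HN := INR_ge1 n Hn).
  destruct (exp_approx_bounds n t Hn ltac:(lra)) as [[P1 P2] P3].
  assert (Hs : 0 < sqrt t) by (apply sqrt_lt_R0; lra).
  assert (L := abs_ln_le t ltac:(lra)).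
  assert (E := exp_neg_decay4 t ltac:(lra)). assert (Ep := exp_pos (- t)).
  rewrite Rabs_mult, (Rabs_right (exp (- t) - exp_approx n t)) by lra.
  assert (Hl := Rabs_pos (ln t)).
  apply Rle_trans with ((t * t * exp (- t) / INR n) * (2 * (1 + t) / sqrt t)).
  { apply Rmult_le_compat; lra. }
  apply Rle_trans with ((t * t * (256 / (1 + t) ^ 4) / INR n) * (2 * (1 + t) / sqrt t)).
  { apply Rmult_le_compat_r; [apply Rdiv_le_0_compat; lra|].
    unfold Rdiv. apply Rmult_le_compat_r; [left; apply Rinv_0_lt_compat; lra|].
    apply Rmult_le_compat_l; nra. }
  replace ((t * t * (256 / (1 + t) ^ 4) / INR n) * (2 * (1 + t) / sqrt t)) with
    ((512 / INR n) / (sqrt t * (1 + t)) * (t * t / ((1 + t) * (1 + t)))) by (simpl; field; lra).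
  rewrite <- (Rmult_1_r ((512 / INR n) / (sqrt t * (1 + t)))) at 2.
  apply Rmult_le_compat_l; [apply Rdiv_le_0_compat; [apply Rdiv_le_0_compat|]; nra|].
  apply (Rmult_le_reg_r ((1 + t) * (1 + t))); [nra|].
  unfold Rdiv. rewrite Rmult_assoc, Rinv_l by nra. nra.
Qed.

(** The tail [∫_b^n P_n(t) log t dt] lies in [[0, 27/b]], being dominated by
    [∫_b^∞ t e^{-t} dt = (1+b) e^{-b}]. *)
Lemma RInt_exp_approx_ln_tail n b : (1 <= n)%nat -> 1 <= b <= INR n ->
  0 <= RInt (fun t => exp_approx n t * ln t) b (INR n) <= 27 / b.
Proof.
  intros Hn Hb.
  assert (Hf : forall t, b <= t <= INR n -> 0 <= exp_approx n t * ln t <= t * exp (- t)).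
  { intros t Ht. destruct (exp_approx_bounds n t Hn ltac:(lra)) as [[P1 P2] _].
    assert (0 <= ln t) by (rewrite <- ln_1; apply ln_le; lra).
    assert (ln t < t) by (apply ln_lt_self; lra). split; [apply Rmult_le_pos|]; nra. }
  assert (Hex : ex_RInt (fun t => exp_approx n t * ln t) b (INR n))
    by (apply ex_RInt_pos; [apply cont_exp_approx_ln|lra|lra]).
  split.
  - apply RInt_ge_0; [lra|exact Hex|]. intros t Ht. apply Hf. lra.
  - apply Rle_trans with (RInt (fun t => t * exp (- t)) b (INR n)).
    + apply RInt_le; [lra|exact Hex| |intros t Ht; apply Hf; lra].
      apply ex_RInt_pos; [|lra|lra]. apply cont_pos_derivable. intros; auto_derive; auto.
    + rewrite (RInt_derive (fun t => - (t + 1) * exp (- t))).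
      * assert (H := sq_exp_decay b ltac:(lra)). assert (Hp := exp_pos (- INR n)).
        assert (Hq := exp_pos (- b)).
        assert (0 <= (INR n + 1) * exp (- INR n)) by (apply Rmult_le_pos; lra). nra.
      * intros; auto_derive; auto; ring.
      * intros; apply (ex_derive_continuous (fun t => t * exp (- t))); auto_derive; auto.
Qed.

(** The key estimate: [|∫_a^b e^{-t} log t - G_n| ≤ 2√a + 2a + 512π/n + 27/b],
    splitting [e^{-t} = P_n(t) + (e^{-t} - P_n(t))] and [∫_a^b = ∫_a^n - ∫_b^n]. *)
Lemma RInt_gamma_integrand_le n a b : (1 <= n)%nat -> 0 < a <= 1 -> 1 <= b <= INR n ->
  Rabs (RInt gamma_integrand a b - gamma_seq n) <= 2 * sqrt a + 2 * a + 512 * PI / INR n + 27 / b.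
Proof.
  intros Hn Ha Hb. assert (HN := INR_ge1 n Hn).
  set (f1 := fun t => exp_approx n t * ln t).
  set (f2 := fun t => (exp (- t) - exp_approx n t) * ln t).
  assert (C1 : cont_pos f1) by apply cont_exp_approx_ln.
  assert (C2 : cont_pos f2).
  { apply cont_pos_derivable. intros t Ht. unfold f2, exp_approx. auto_derive. lra. }
  assert (Split : RInt gamma_integrand a b = RInt f1 a b + RInt f2 a b).
  { rewrite <- (RInt_plus f1 f2) by (apply ex_RInt_pos; auto; lra).
    apply RInt_ext. intros. unfold gamma_integrand, f1, f2. change (plus ?x ?y) with (x + y).
    as_real_eq. ring. }
  assert (Chasles : RInt f1 a (INR n) = RInt f1 a b + RInt f1 b (INR n)).
  { symmetry. apply (RInt_Chasles f1); apply ex_RInt_pos; auto; lra. }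
  assert (B1 := RInt_exp_approx_ln n a Hn Ha ltac:(lra)). fold f1 in B1.
  assert (B2 : Rabs (RInt f2 a b) <= 512 / INR n * PI).
  { apply RInt_weight_bound; [apply Rdiv_le_0_compat; lra|lra| |].
    - intros; apply C2; lra.
    - intros t Ht; apply exp_approx_error_le; auto; lra. }
  assert (B3 := RInt_exp_approx_ln_tail n b Hn Hb). fold f1 in B3.
  replace (RInt gamma_integrand a b - gamma_seq n)
    with ((RInt f1 a (INR n) - gamma_seq n) - RInt f1 b (INR n) + RInt f2 a b) by lra.
  replace (512 * PI / INR n) with (512 / INR n * PI) by (field; lra).
  eapply Rle_trans; [apply Rabs_triang|].
  eapply Rle_trans; [apply Rplus_le_compat_r, Rabs_triang|].
  rewrite Rabs_Ropp, (Rabs_right (RInt f1 b (INR n))) by lra. lra.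
Qed.

Lemma sqrt_eventually_small eps : 0 < eps ->
  exists a0, 0 < a0 <= 1 /\ forall a, 0 < a < a0 -> 2 * sqrt a + 2 * a < eps.
Proof.
  intros He. exists (Rmin 1 ((eps / 4) * (eps / 4))).
  split; [split; [apply Rmin_glb_lt; nra|apply Rmin_l]|].
  intros a Ha. assert (a < 1) by (eapply Rlt_le_trans; [apply Ha|apply Rmin_l]).
  assert (a < (eps / 4) * (eps / 4)) by (eapply Rlt_le_trans; [apply Ha|apply Rmin_r]).
  assert (sqrt a < eps / 4) by (rewrite <- (sqrt_square (eps / 4)) by lra; apply sqrt_lt_1_alt; lra).
  assert (a <= sqrt a).
  { assert (Hs := sqrt_sqrt a ltac:(lra)). assert (0 <= sqrt a) by apply sqrt_pos. nra. }
  lra.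
Qed.

(** Two values of [G_n] are both close to the same [∫_a^b e^{-t} log t]. *)
Lemma gamma_seq_cauchy : Cauchy_crit gamma_seq.
Proof.
  intros eps He.
  destruct (sqrt_eventually_small (eps / 8) ltac:(lra)) as [a0 [Ha0 Ha]].
  destruct (inv_eventually_small 27 (eps / 8) ltac:(lra)) as [b [Hb1 Hb]].
  destruct (inv_eventually_small (512 * PI) (eps / 8) ltac:(lra)) as [c [Hc1 Hc]].
  destruct (nat_beyond (Rmax b c)) as [N0 HN0].
  assert (b <= INR N0) by (assert (Hm := Rmax_l b c); lra).
  assert (c <= INR N0) by (assert (Hm := Rmax_r b c); lra).
  exists N0. intros n m Hn Hm.
  assert (INR N0 <= INR n) by (apply le_INR; lia).
  assert (INR N0 <= INR m) by (apply le_INR; lia).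
  assert (1 <= n)%nat by (apply INR_le; simpl; lra).
  assert (1 <= m)%nat by (apply INR_le; simpl; lra).
  set (a := a0 / 2). assert (Hsa := Ha a ltac:(unfold a; lra)).
  assert (G1 := RInt_gamma_integrand_le n a b ltac:(auto) ltac:(unfold a; lra) ltac:(lra)).
  assert (G2 := RInt_gamma_integrand_le m a b ltac:(auto) ltac:(unfold a; lra) ltac:(lra)).
  assert (Q1 := Hb b ltac:(lra)).
  assert (Q2 := Hc (INR n) ltac:(lra)). assert (Q3 := Hc (INR m) ltac:(lra)).
  unfold R_dist.
  replace (gamma_seq n - gamma_seq m)
    with ((RInt gamma_integrand a b - gamma_seq m) - (RInt gamma_integrand a b - gamma_seq n)) by ring.
  eapply Rle_lt_trans; [apply Rabs_triang|]. rewrite Rabs_Ropp. lra.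
Qed.

Lemma int_gamma_integrand_limit g : Un_cv gamma_seq g -> int_0_oo gamma_integrand g.
Proof.
  intros Hg eps He.
  destruct (sqrt_eventually_small (eps / 4) ltac:(lra)) as [a0 [Ha0 Ha]].
  destruct (inv_eventually_small 27 (eps / 4) ltac:(lra)) as [b [Hb1 Hb]].
  destruct (inv_eventually_small (512 * PI) (eps / 4) ltac:(lra)) as [c [Hc1 Hc]].
  exists a0. split; [lra|]. exists b. intros a x Ha1 Hx1.
  destruct (Hg (eps / 4) ltac:(lra)) as [N1 HN1].
  destruct (nat_beyond (Rmax x c)) as [N0 HN0].
  set (n := max N0 N1).
  assert (INR N0 <= INR n) by (apply le_INR; unfold n; lia).
  assert (x <= INR n) by (assert (Hm := Rmax_l x c); lra).
  assert (c <= INR n) by (assert (Hm := Rmax_r x c); lra).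
  assert (1 <= n)%nat by (apply INR_le; simpl; lra).
  assert (Hsa := Ha a Ha1).
  assert (G := RInt_gamma_integrand_le n a x ltac:(auto) ltac:(lra) ltac:(lra)).
  assert (Q1 := Hb x ltac:(lra)). assert (Q2 := Hc (INR n) ltac:(lra)).
  assert (Q3 := HN1 n ltac:(unfold n; lia)). unfold R_dist in Q3.
  replace (RInt gamma_integrand a x - g) with ((RInt gamma_integrand a x - gamma_seq n) + (gamma_seq n - g)) by ring.
  eapply Rle_lt_trans; [apply Rabs_triang|]. lra.
Qed.

(** [H_{n+1} - log(n+1) = -(1 + 1/n) G_n - log(1 + 1/n)], so [γ = -lim G_n]. *)
Lemma euler_gamma_limit g : Un_cv gamma_seq g -> euler_gamma = - g.
Proof.
  intros Hg. apply is_lim_seq_Reals in Hg.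
  assert (Hinv : is_lim_seq (fun n => / INR n) 0).
  { replace (Finite 0) with (Rbar_inv p_infty) by reflexivity.
    apply is_lim_seq_inv; [apply is_lim_seq_INR|discriminate]. }
  assert (H1 : is_lim_seq (fun n => 1 + / INR n) 1).
  { replace (Finite 1) with (Finite (1 + 0)) by (f_equal; ring).
    apply is_lim_seq_plus'; [apply is_lim_seq_const|auto]. }
  assert (Hln : is_lim_seq (fun n => ln (1 + / INR n)) 0).
  { rewrite <- ln_1. apply (is_lim_seq_continuous ln (fun n => 1 + / INR n) 1); auto.
    apply continuity_pt_filterlim. apply (ex_derive_continuous ln). auto_derive. lra. }
  assert (L : is_lim_seq (fun n => - ln (1 + / INR n) - (1 + / INR n) * gamma_seq n) (- g)).
  { replace (- g) with (- 0 - 1 * g) by ring.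
    apply is_lim_seq_minus'; [apply (is_lim_seq_opp _ (Finite 0)); auto|].
    apply is_lim_seq_mult'; auto. }
  unfold euler_gamma. rewrite (is_lim_seq_unique _ (- g)); [reflexivity|].
  eapply is_lim_seq_ext_loc; [|apply L].
  exists 1%nat. intros n Hn. assert (HN := INR_ge1 n Hn).
  unfold gamma_seq, harmonic. rewrite S_INR.
  replace (1 + / INR n) with ((INR n + 1) / INR n) by (field; lra).
  rewrite ln_div by lra. field. lra.
Qed.

Theorem int_gamma_integrand : int_0_oo gamma_integrand (- euler_gamma).
Proof.
  destruct (Rcomplete.R_complete gamma_seq gamma_seq_cauchy) as [g Hg].
  rewrite (euler_gamma_limit g Hg), Ropp_involutive. apply int_gamma_integrand_limit. exact Hg.
Qed.

(** [∫_0^∞ t log t e^{-t} dt = 1 - γ], by parts from [∫ e^{-t} log t = -γ]. *)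
Lemma int_t_ln_exp : int_0_oo (fun t => t * ln t * exp (- t)) (1 - euler_gamma).
Proof.
  assert (Cb : cont_pos (fun t => t * ln t * exp (- t) - (ln t + 1) * exp (- t)))
    by (apply cont_pos_derivable; intros; auto_derive; lra).
  assert (Cg : cont_pos gamma_integrand)
    by (apply cont_pos_derivable; intros; unfold gamma_integrand; auto_derive; lra).
  assert (H := int_0_oo_plus _ _ _ _ Cb Cg int_by_parts_boundary int_gamma_integrand).
  assert (Cbg : cont_pos (fun t => t * ln t * exp (- t) - (ln t + 1) * exp (- t) + gamma_integrand t))
    by (apply cont_pos_plus; auto).
  assert (Ce : cont_pos (fun t => exp (- t))) by (apply cont_pos_derivable; intros; auto_derive; lra).
  refine (int_0_oo_congr _ _ _ _ _ _ (int_0_oo_plus _ _ _ _ Cbg Ce H int_exp)).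
  - intros t Ht. unfold gamma_integrand. ring.
  - ring.
Qed.

Lemma int_t_exp_k k : 0 < k -> int_0_oo (fun t => t * exp (- (k * t))) (1 / (k * k)).
Proof.
  intros Hk.
  assert (Cv : cont_pos (fun t => t * exp (- t))) by (apply cont_pos_derivable; intros; auto_derive; lra).
  refine (int_0_oo_congr _ _ _ _ _ _
            (int_0_oo_scal _ (/ k) _ (cont_pos_dilate _ _ Hk Cv) (int_0_oo_dilate _ k _ Hk Cv int_t_exp))).
  - intros t Ht. simpl. field. lra.
  - field. lra.
Qed.

Lemma int_t_ln_exp_k k : 0 < k ->
  int_0_oo (fun t => t * ln t * exp (- (k * t))) ((1 - euler_gamma - ln k) / (k * k)).
Proof.
  intros Hk.
  assert (Cu : cont_pos (fun t => t * ln t * exp (- t)))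
    by (apply cont_pos_derivable; intros; auto_derive; lra).
  assert (Cv : cont_pos (fun t => t * exp (- t))) by (apply cont_pos_derivable; intros; auto_derive; lra).
  assert (Hu := int_0_oo_dilate _ k _ Hk Cu int_t_ln_exp).
  assert (Hv := int_0_oo_dilate _ k _ Hk Cv int_t_exp).
  assert (Cu' : cont_pos (fun t => / k * (k * t * ln (k * t) * exp (- (k * t)))))
    by (apply cont_pos_derivable; intros; auto_derive; nra).
  assert (Cv' : cont_pos (fun t => - (ln k / k) * (k * t * exp (- (k * t)))))
    by (apply cont_pos_derivable; intros; auto_derive; nra).
  assert (H1 := int_0_oo_scal _ (/ k) _ (cont_pos_dilate _ _ Hk Cu) Hu).
  assert (H2 := int_0_oo_scal _ (- (ln k / k)) _ (cont_pos_dilate _ _ Hk Cv) Hv).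
  refine (int_0_oo_congr _ _ _ _ _ _ (int_0_oo_plus _ _ _ _ Cu' Cv' H1 H2)).
  - intros t Ht. simpl. rewrite ln_mult by lra. field. lra.
  - field. lra.
Qed.

(** ** The series of [artanh] and of [A(t) = artanh(e^{-t})] *)

Definition artanh_partial (x : R) (n : nat) : R :=
  sum_f_R0 (fun j => x ^ (2 * j + 1) / INR (2 * j + 1)) n.

Lemma artanh_derive y : -1 < y < 1 -> is_derive artanh y (/ (1 - y * y)).
Proof.
  intros Hy. unfold artanh. auto_derive.
  - split; [lra|]. split; [|auto]. apply Rmult_lt_0_compat; [lra|]. apply Rinv_0_lt_compat; lra.
  - field. repeat split; intro; nra.
Qed.

Lemma artanh_partial_derive y n :
  is_derive (fun y => artanh_partial y n) y (sum_f_R0 (fun j => (y * y) ^ j) n).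
Proof.
  apply (is_derive_sum (fun j y => y ^ (2 * j + 1) / INR (2 * j + 1)) (fun j y => (y * y) ^ j)).
  intros j. auto_derive; [auto|].
  replace (j + (j + 0) + 1)%nat with (2 * j + 1)%nat by lia.
  replace (pred (2 * j + 1)) with (2 * j)%nat by lia.
  rewrite pow_sqr. as_real_eq. field. apply not_0_INR. lia.
Qed.

(** [0 ≤ artanh x - Σ_{j≤n} x^{2j+1}/(2j+1) ≤ x^{2n+3}/((2n+3)(1-x²))] on [[0,1)],
    by integrating the geometric remainder [y^{2n+2}/(1-y²) ≤ y^{2n+2}/(1-x²)]. *)
Lemma artanh_remainder x n : 0 <= x < 1 ->
  0 <= artanh x - artanh_partial x n <= x ^ (2 * n + 3) / (INR (2 * n + 3) * (1 - x * x)).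
Proof.
  intros Hx. set (h := fun y => artanh y - artanh_partial y n).
  set (dh := fun y => (y * y) ^ (S n) / (1 - y * y)).
  assert (Hd : forall y, -1 < y < 1 -> is_derive h y (dh y)).
  { intros y Hy. assert (D := is_derive_minus _ _ y _ _ (artanh_derive y Hy) (artanh_partial_derive y n)).
    eapply is_derive_ext; [intros; reflexivity|].
    replace (dh y) with (minus (/ (1 - y * y)) (sum_f_R0 (fun j => (y * y) ^ j) n)); [exact D|].
    change (minus ?a ?b) with (a - b). rewrite tech3 by nra. unfold dh. as_real_eq. field. nra. }
  assert (Hc : forall y, -1 < y < 1 -> continuous dh y).
  { intros y Hy. apply (ex_derive_continuous dh). unfold dh. auto_derive. nra. }
  assert (H0 : h 0 = 0).
  { unfold h, artanh, artanh_partial.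
    rewrite (sum_eq _ (fun _ => 0)) by (intros; rewrite pow_i by lia; unfold Rdiv; ring).
    rewrite sum_cte. replace ((1 + 0) / (1 - 0)) with 1 by field. rewrite ln_1. ring. }
  assert (E : h x = RInt dh 0 x).
  { rewrite (RInt_derive h dh); rewrite ?Rmin_left, ?Rmax_right by lra;
      [rewrite H0; ring|intros; apply Hd; lra|intros; apply Hc; lra]. }
  change (artanh x - artanh_partial x n) with (h x). rewrite E.
  assert (Hex : ex_RInt dh 0 x)
    by (apply ex_RInt_cont; rewrite Rmin_left, Rmax_right by lra; intros; apply Hc; lra).
  split.
  - apply RInt_ge_0; [lra|auto|]. intros y Hy. unfold dh.
    apply Rdiv_le_0_compat; [apply pow_le|]; nra.
  - apply Rle_trans with (RInt (fun y => y ^ (2 * n + 2) / (1 - x * x)) 0 x).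
    + apply RInt_le; [lra|auto| |].
      * apply ex_RInt_cont. intros.
        apply (ex_derive_continuous (fun y => y ^ (2 * n + 2) / (1 - x * x))). auto_derive. nra.
      * intros y Hy. unfold dh. rewrite <- pow_sqr.
        replace (2 * S n)%nat with (2 * n + 2)%nat by lia.
        unfold Rdiv. apply Rmult_le_compat_l; [apply pow_le; lra|]. apply Rinv_le_contravar; nra.
    + right. rewrite (RInt_derive (fun y => y ^ (2 * n + 3) / (INR (2 * n + 3) * (1 - x * x)))).
      * rewrite pow_i by lia. unfold Rdiv. ring.
      * intros y _. auto_derive; [auto|].
        replace (n + (n + 0) + 3)%nat with (2 * n + 3)%nat by lia.
        replace (pred (2 * n + 3)) with (2 * n + 2)%nat by lia.
        field. split; [intro; nra|]. apply not_0_INR; lia.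
      * intros y _. apply (ex_derive_continuous (fun y => y ^ (2 * n + 2) / (1 - x * x))). auto_derive. nra.
Qed.

Definition artanh_exp (t : R) : R := artanh (exp (- t)).

Definition artanh_exp_partial (t : R) (n : nat) : R :=
  sum_f_R0 (fun j => exp (- (INR (2 * j + 1) * t)) / INR (2 * j + 1)) n.

(** The remainder bound for [A], via [x = e^{-t}] and
    [x/(1-x²) ≤ e^{-t}(1+2t)/(2t)]. *)
Lemma artanh_exp_remainder t n : 0 < t ->
  0 <= artanh_exp t - artanh_exp_partial t n
    <= exp (- t) * (1 + 2 * t) / (2 * t) / INR (2 * n + 3).
Proof.
  intros Ht. destruct (exp_neg_in_01 t Ht) as [X1 X2]. set (x := exp (- t)) in *.
  assert (E : artanh_exp_partial t n = artanh_partial x n).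
  { apply sum_eq. intros j _. unfold x. rewrite exp_pow. do 3 f_equal. ring. }
  rewrite E. unfold artanh_exp. fold x.
  destruct (artanh_remainder x n ltac:(lra)) as [R1 R2]. split; [auto|].
  eapply Rle_trans; [apply R2|].
  assert (HI : 0 < INR (2 * n + 3)) by (apply lt_0_INR; lia).
  (* [x² (1 + 2t) ≤ 1] since [e^{2t} ≥ 1 + 2t] *)
  assert (Hb : x * x * (1 + 2 * t) <= 1).
  { replace (x * x) with (exp (- (2 * t))) by (unfold x; rewrite <- exp_plus; f_equal; ring).
    assert (H := exp_ineq1_le (2 * t)).
    assert (exp (- (2 * t)) * exp (2 * t) = 1) by (rewrite <- exp_plus, Rplus_opp_l; apply exp_0).
    assert (0 < exp (- (2 * t))) by apply exp_pos. nra. }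
  assert (Hp : x ^ (2 * n + 3) <= x).
  { rewrite pow_add, pow_sqr. assert (H := pow_in_01 n (x * x) ltac:(nra)).
    assert (H3 : 0 <= x ^ 3 <= x) by (simpl; nra).
    apply Rle_trans with (1 * x ^ 3); [apply Rmult_le_compat_r|]; lra. }
  assert (H1 : 0 < 1 - x * x) by nra.
  apply Rle_trans with (x / (INR (2 * n + 3) * (1 - x * x))).
  { unfold Rdiv. apply Rmult_le_compat_r; [left; apply Rinv_0_lt_compat; nra|auto]. }
  apply (Rmult_le_reg_r (INR (2 * n + 3) * (1 - x * x) * (2 * t)));
    [repeat apply Rmult_lt_0_compat; lra|].
  replace (x / (INR (2 * n + 3) * (1 - x * x)) * (INR (2 * n + 3) * (1 - x * x) * (2 * t)))
    with (2 * t * x) by (field; split; apply Rgt_not_eq; lra).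
  replace (x * (1 + 2 * t) / (2 * t) / INR (2 * n + 3) * (INR (2 * n + 3) * (1 - x * x) * (2 * t)))
    with (x * (1 + 2 * t) * (1 - x * x)) by (field; split; apply Rgt_not_eq; lra).
  nra.
Qed.

Lemma cont_artanh_exp : cont_pos artanh_exp.
Proof.
  apply cont_pos_derivable. intros t Ht. destruct (exp_neg_in_01 t Ht).
  unfold artanh_exp, artanh. auto_derive.
  split; [intro; lra|]. split; [|auto]. apply Rmult_lt_0_compat; [lra|]. apply Rinv_0_lt_compat; lra.
Qed.

Lemma cont_artanh_exp_partial n : cont_pos (fun t => artanh_exp_partial t n).
Proof.
  apply (cont_pos_sum (fun j t => exp (- (INR (2 * j + 1) * t)) / INR (2 * j + 1))).
  intros j. apply cont_pos_derivable. intros t _. auto_derive. auto.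
Qed.

Lemma inv_odd_to_0 C : Un_cv (fun n => C / INR (2 * n + 3)) 0.
Proof.
  intros eps He. destruct (inv_eventually_small (Rabs C) eps He) as [b [Hb1 Hb]].
  destruct (nat_beyond b) as [N HN]. exists N. intros n Hn. unfold R_dist.
  assert (HI : INR N <= INR (2 * n + 3)) by (apply le_INR; lia).
  rewrite Rminus_0_r, Rabs_div, (Rabs_right (INR _)) by (apply Rle_ge || apply not_0_INR; try apply pos_INR; lia).
  apply Hb. lra.
Qed.

Section TermByTerm.

Variables (phi : R -> R) (C : R) (I : nat -> R).
Hypothesis cont_phi : cont_pos phi.
Hypothesis C_nonneg : 0 <= C.
Hypothesis phi_weight :
  forall t, 0 < t -> Rabs (phi t) * (exp (- t) * (1 + 2 * t) / (2 * t)) <= C / (sqrt t * (1 + t)).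
Hypothesis int_phi_exp : forall j, int_0_oo (fun t => phi t * exp (- (INR (2 * j + 1) * t))) (I j).

Lemma int_0_oo_artanh_exp_partial n :
  int_0_oo (fun t => phi t * artanh_exp_partial t n) (sum_f_R0 (fun j => I j / INR (2 * j + 1)) n).
Proof.
  assert (Ce : forall j, cont_pos (fun t => phi t * exp (- (INR (2 * j + 1) * t)))).
  { intros j. apply cont_pos_mult; [exact cont_phi|]. apply cont_pos_derivable. intros; auto_derive; auto. }
  set (g := fun j t => / INR (2 * j + 1) * (phi t * exp (- (INR (2 * j + 1) * t)))).
  assert (Cg : forall j, cont_pos (g j)).
  { intros j. apply (cont_pos_mult (fun _ => / INR (2 * j + 1))); [|apply Ce].
    intros t _. apply continuous_const. }
  refine (int_0_oo_congr _ _ _ _ _ _ (int_0_oo_sum g (fun j => / INR (2 * j + 1) * I j) n Cg _)).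
  - intros t _. unfold g, artanh_exp_partial. rewrite <- sum_scal_l. apply sum_eq.
    intros j _. assert (Hj := INR_odd_pos j). field. lra.
  - apply sum_eq. intros j _. assert (Hj := INR_odd_pos j). field. lra.
  - intros j. apply int_0_oo_scal; [apply Ce|apply int_phi_exp].
Qed.

Lemma RInt_artanh_exp_remainder_le n a b : 0 < a <= b ->
  Rabs (RInt (fun t => phi t * artanh_exp t - phi t * artanh_exp_partial t n) a b)
    <= C * PI / INR (2 * n + 3).
Proof.
  intros Hab. assert (HI3 : 0 < INR (2 * n + 3)) by (apply lt_0_INR; lia).
  replace (C * PI / INR (2 * n + 3)) with (C / INR (2 * n + 3) * PI) by (field; lra).
  apply RInt_weight_bound; [apply Rdiv_le_0_compat; lra|lra| |].
  - intros t Ht. apply (cont_pos_minus (fun t => phi t * artanh_exp t) (fun t => phi t * artanh_exp_partial t n));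
      [apply cont_pos_mult; [exact cont_phi|apply cont_artanh_exp]|
       apply cont_pos_mult; [exact cont_phi|apply cont_artanh_exp_partial]|lra].
  - intros t Ht. destruct (artanh_exp_remainder t n ltac:(lra)) as [R1 R2].
    assert (Hs : 0 < sqrt t) by (apply sqrt_lt_R0; lra).
    rewrite <- Rmult_minus_distr_l, Rabs_mult, (Rabs_right (artanh_exp t - _)) by lra.
    apply Rle_trans with (Rabs (phi t) * (exp (- t) * (1 + 2 * t) / (2 * t) / INR (2 * n + 3))).
    { apply Rmult_le_compat_l; [apply Rabs_pos|exact R2]. }
    replace (Rabs (phi t) * (exp (- t) * (1 + 2 * t) / (2 * t) / INR (2 * n + 3)))
      with (Rabs (phi t) * (exp (- t) * (1 + 2 * t) / (2 * t)) / INR (2 * n + 3)) by (unfold Rdiv; ring).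
    replace (C / INR (2 * n + 3) / (sqrt t * (1 + t))) with (C / (sqrt t * (1 + t)) / INR (2 * n + 3))
      by (field; repeat split; nra).
    unfold Rdiv at 1 3. apply Rmult_le_compat_r; [left; apply Rinv_0_lt_compat; lra|]. apply phi_weight. lra.
Qed.

Lemma int_0_oo_artanh_series S :
  is_series (fun j => I j / INR (2 * j + 1)) S -> int_0_oo (fun t => phi t * artanh_exp t) S.
Proof.
  intros HS.
  apply (int_0_oo_approx _ (fun n t => phi t * artanh_exp_partial t n)
           (fun n => sum_f_R0 (fun j => I j / INR (2 * j + 1)) n)
           (fun n => C * PI / INR (2 * n + 3))).
  - apply cont_pos_mult; [exact cont_phi|apply cont_artanh_exp].
  - intros n. apply cont_pos_mult; [exact cont_phi|apply cont_artanh_exp_partial].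
  - apply int_0_oo_artanh_exp_partial.
  - apply is_series_Reals in HS. exact HS.
  - apply inv_odd_to_0.
  - apply RInt_artanh_exp_remainder_le.
Qed.

End TermByTerm.

(** ** [ζ(3)], [ζ'(3)] and their odd parts

    For [s ≥ 5/2] both [(k+1)^{-s}] and [log(k+1) (k+1)^{-s}] are dominated by
    the telescoping sequence [4 (1/(k+1) - 1/(k+2))], whose tails are explicit.
    This gives the series of [ζ(3)] and, by uniform convergence of the
    differentiated series near [3], that of [ζ'(3)]. *)

Definition zeta_majorant (k : nat) : R := 4 * (/ INR (S k) - / INR (S (S k))).

Lemma zeta_majorant_sum n : sum_f_R0 zeta_majorant n = 4 * (1 - / INR (S (S n))).
Proof.
  induction n as [|n IH]; [unfold zeta_majorant; simpl; field|].
  rewrite tech5, IH. unfold zeta_majorant. ring.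
Qed.

Lemma zeta_majorant_series : is_series zeta_majorant 4.
Proof.
  apply is_series_Reals. intros eps He.
  destruct (inv_eventually_small 4 eps He) as [b [Hb1 Hb]].
  destruct (nat_beyond b) as [N HN]. exists N. intros n Hn.
  unfold R_dist. rewrite zeta_majorant_sum.
  assert (HI : INR N <= INR (S (S n))) by (apply le_INR; lia).
  replace (4 * (1 - / INR (S (S n))) - 4) with (- (4 / INR (S (S n)))) by (field; lra).
  rewrite Rabs_Ropp, Rabs_right by (apply Rle_ge, Rdiv_le_0_compat; lra). apply Hb. lra.
Qed.

Lemma dominated_partial_diff (a : nat -> R) n d :
  (forall k, Rabs (a k) <= zeta_majorant k) ->
  Rabs (sum_f_R0 a (n + d) - sum_f_R0 a n) <= 4 * (/ INR (S (S n)) - / INR (S (S (n + d)))).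
Proof.
  intros H. induction d as [|d IH].
  - rewrite Nat.add_0_r, Rminus_diag, Rabs_R0. lra.
  - replace (n + S d)%nat with (S (n + d)) by lia. rewrite tech5.
    replace (sum_f_R0 a (n + d) + a (S (n + d)) - sum_f_R0 a n)
      with ((sum_f_R0 a (n + d) - sum_f_R0 a n) + a (S (n + d))) by ring.
    eapply Rle_trans; [apply Rabs_triang|]. assert (Ha := H (S (n + d))).
    unfold zeta_majorant in Ha. lra.
Qed.

Lemma dominated_ex_series (a : nat -> R) :
  (forall k, Rabs (a k) <= zeta_majorant k) -> ex_series a.
Proof. intros H. apply (ex_series_le a zeta_majorant); [exact H|]. exists 4. apply zeta_majorant_series. Qed.

Lemma dominated_series_tail (a : nat -> R) l n :
  (forall k, Rabs (a k) <= zeta_majorant k) -> is_series a l ->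
  Rabs (l - sum_f_R0 a n) <= 4 / INR (S (S n)).
Proof.
  intros H Hs. apply is_series_Reals in Hs. apply Rle_plus_epsilon. intros eps He.
  destruct (Hs eps He) as [N HN]. set (m := (n + N)%nat).
  assert (H1 := HN m ltac:(unfold m; lia)). unfold R_dist in H1.
  assert (H2 := dominated_partial_diff a n N H). fold m in H2.
  assert (0 < / INR (S (S m))) by (apply Rinv_0_lt_compat, lt_0_INR; lia).
  replace (l - sum_f_R0 a n) with (- (sum_f_R0 a m - l) + (sum_f_R0 a m - sum_f_R0 a n)) by ring.
  eapply Rle_trans; [apply Rabs_triang|]. rewrite Rabs_Ropp. unfold Rdiv. lra.
Qed.

Definition zeta_term (s : R) (k : nat) : R := / Rpower (INR (S k)) s.
Definition zeta_term_deriv (s : R) (k : nat) : R := - (ln (INR (S k)) * / Rpower (INR (S k)) s).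

Lemma zeta_term_derive s k : is_derive (fun s => zeta_term s k) s (zeta_term_deriv s k).
Proof.
  unfold zeta_term, zeta_term_deriv, Rpower. auto_derive; [apply Rgt_not_eq, exp_pos|].
  assert (H := exp_pos (s * ln (INR (S k)))).
  change (match k with 0%nat => 1 | S _ => INR k + 1 end) with (INR (S k)). as_real_eq. field. lra.
Qed.

Lemma Rpower_ge_5_2 x s : 1 <= x -> 5 / 2 <= s -> x * x * sqrt x <= Rpower x s.
Proof.
  intros Hx Hs. assert (Hl : 0 <= ln x) by (rewrite <- ln_1; apply ln_le; lra).
  replace (x * x * sqrt x) with (Rpower x (5 / 2)).
  - unfold Rpower. apply exp_le_mono. nra.
  - replace (5 / 2) with (INR 2 + / 2) by (simpl; field).
    rewrite Rpower_plus, Rpower_pow, Rpower_sqrt by lra. simpl. ring.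
Qed.

(** Domination of [(k+1)^{-s}] and [log(k+1) (k+1)^{-s}], [s ≥ 5/2], using
    [(k+1)^{-s} ≤ 1/((k+1)² √(k+1))] and [log x ≤ 2√x]. *)
Lemma zeta_terms_dominated s k : 5 / 2 <= s ->
  Rabs (zeta_term s k) <= zeta_majorant k /\ Rabs (zeta_term_deriv s k) <= zeta_majorant k.
Proof.
  intros Hs. assert (H1 : 1 <= INR (S k)) by (apply INR_ge1; lia).
  assert (HT : 2 / (INR (S k) * INR (S k)) <= zeta_majorant k).
  { unfold zeta_majorant. rewrite (S_INR (S k)).
    replace (4 * (/ INR (S k) - / (INR (S k) + 1))) with (4 / (INR (S k) * (INR (S k) + 1))) by (field; lra).
    apply (Rmult_le_reg_r (INR (S k) * INR (S k) * (INR (S k) + 1))); [nra|].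
    replace (2 / (INR (S k) * INR (S k)) * (INR (S k) * INR (S k) * (INR (S k) + 1)))
      with (2 * (INR (S k) + 1)) by (field; lra).
    replace (4 / (INR (S k) * (INR (S k) + 1)) * (INR (S k) * INR (S k) * (INR (S k) + 1)))
      with (4 * INR (S k)) by (field; lra). lra. }
  unfold zeta_term, zeta_term_deriv. set (x := INR (S k)) in *.
  assert (HP := Rpower_ge_5_2 x s H1 Hs).
  assert (Hsq : 1 <= sqrt x) by (rewrite <- sqrt_1; apply sqrt_le_1_alt; lra).
  assert (Hl : 0 <= ln x) by (rewrite <- ln_1; apply ln_le; lra).
  assert (Hln : ln x <= 2 * sqrt x).
  { assert (Hss : sqrt x * sqrt x = x) by (apply sqrt_sqrt; lra).
    assert (ln x = 2 * ln (sqrt x)) by (rewrite <- Hss at 1; rewrite ln_mult by lra; ring).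
    assert (ln (sqrt x) < sqrt x) by (apply ln_lt_self; lra). lra. }
  assert (Hpos : 0 < x * x * sqrt x) by (apply Rmult_lt_0_compat; nra).
  assert (Hinv : / Rpower x s <= / (x * x * sqrt x)) by (apply Rinv_le_contravar; lra).
  assert (Hip : 0 < / Rpower x s) by (apply Rinv_0_lt_compat; lra).
  split.
  - rewrite Rabs_right by lra. eapply Rle_trans; [apply Hinv|]. eapply Rle_trans; [|apply HT].
    apply Rle_trans with (/ (x * x)); [apply Rinv_le_contravar; nra|].
    assert (0 < / (x * x)) by (apply Rinv_0_lt_compat; nra). unfold Rdiv. lra.
  - rewrite Rabs_Ropp, Rabs_right by (apply Rle_ge, Rmult_le_pos; lra).
    eapply Rle_trans; [|apply HT].
    apply Rle_trans with (2 * sqrt x * / (x * x * sqrt x)); [apply Rmult_le_compat; lra|].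
    right. field. split; lra.
Qed.

Lemma zeta_series s : 5 / 2 <= s -> is_series (zeta_term s) (zeta s).
Proof.
  intros Hs. unfold zeta. apply Series_correct, dominated_ex_series.
  intros k. apply zeta_terms_dominated. exact Hs.
Qed.

(** [ζ'(3) = -Σ log(k+1)/(k+1)³], by uniform convergence on [(5/2, 7/2)]. *)
Lemma zeta'_series : is_series (zeta_term_deriv 3) (zeta' 3).
Proof.
  set (g' := fun s => Series (zeta_term_deriv s)).
  assert (Hd : forall s, 5 / 2 <= s -> is_series (zeta_term_deriv s) (g' s)).
  { intros s Hs. apply Series_correct, dominated_ex_series.
    intros k. apply zeta_terms_dominated. exact Hs. }
  assert (HB : forall y, Boule 3 (mkposreal (1 / 2) ltac:(lra)) y -> 5 / 2 <= y).
  { intros y Hy. unfold Boule in Hy. simpl in Hy. apply Rabs_lt_between in Hy. lra. }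
  assert (D : derivable_pt_lim zeta 3 (g' 3)).
  { apply (CVU_derivable (fun n s => sum_f_R0 (zeta_term s) n) (fun n s => sum_f_R0 (zeta_term_deriv s) n)
             zeta g' 3 (mkposreal (1 / 2) ltac:(lra))).
    - intros eps He. destruct (inv_eventually_small 4 eps He) as [b [Hb1 Hb]].
      destruct (nat_beyond b) as [N HN]. exists N. intros n y Hn Hy.
      eapply Rle_lt_trans.
      + apply dominated_series_tail; [intros k; apply zeta_terms_dominated, HB; auto|apply Hd, HB; auto].
      + apply Hb. assert (INR N <= INR (S (S n))) by (apply le_INR; lia). lra.
    - intros x Hx. apply is_series_Reals. apply zeta_series, HB. exact Hx.
    - intros n x _. apply is_derive_Reals.
      apply (is_derive_sum (fun j s => zeta_term s j) (fun j s => zeta_term_deriv s j)).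
      intros j. apply zeta_term_derive.
    - unfold Boule. rewrite Rminus_diag, Rabs_R0. simpl. lra. }
  apply is_derive_Reals in D. unfold zeta'. rewrite (is_derive_unique _ _ _ D). apply Hd. lra.
Qed.

Lemma sum_pairs (a : nat -> R) n :
  sum_f_R0 (fun j => a (2 * j)%nat + a (2 * j + 1)%nat) n = sum_f_R0 a (2 * n + 1).
Proof.
  induction n as [|n IH]; [simpl; ring|].
  rewrite tech5, IH. replace (2 * S n + 1)%nat with (S (S (2 * n + 1))) by lia.
  rewrite !tech5. replace (S (2 * n + 1)) with (2 * S n)%nat by lia.
  replace (S (2 * S n)) with (2 * S n + 1)%nat by lia. ring.
Qed.

Lemma even_index_series (a : nat -> R) l lo :
  is_series a l -> is_series (fun j => a (2 * j + 1)%nat) lo ->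
  is_series (fun j => a (2 * j)%nat) (l - lo).
Proof.
  intros Ha Hodd.
  assert (Hpairs : is_series (fun j => a (2 * j)%nat + a (2 * j + 1)%nat) l).
  { apply is_series_Reals. apply is_series_Reals in Ha. intros eps He.
    destruct (Ha eps He) as [N HN]. exists N. intros n Hn. rewrite sum_pairs. apply HN. lia. }
  replace (l - lo) with (l + -1 * lo) by ring.
  eapply is_series_ext; [|exact (is_series_plus _ _ _ _ Hpairs (is_series_scal (-1) _ _ Hodd))].
  intros n. change (plus ?x ?y) with (x + y). change (scal ?x ?y) with (x * y). as_real_eq. ring.
Qed.

Lemma zeta_term_3 k : zeta_term 3 k = / INR (S k) ^ 3.
Proof.
  unfold zeta_term. replace 3 with (INR 3) at 1 by (simpl; ring).
  rewrite Rpower_pow; [reflexivity|]. apply lt_0_INR; lia.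
Qed.

Lemma zeta_term_deriv_3 k : zeta_term_deriv 3 k = - (ln (INR (S k)) / INR (S k) ^ 3).
Proof. change (zeta_term_deriv 3 k) with (- (ln (INR (S k)) * zeta_term 3 k)). rewrite zeta_term_3. reflexivity. Qed.

Lemma INR_S_odd j : INR (S (2 * j + 1)) = 2 * INR (S j).
Proof. rewrite !S_INR, plus_INR, mult_INR. simpl. ring. Qed.

Lemma odd_zeta3 : is_series (fun j => / INR (2 * j + 1) ^ 3) (7 / 8 * zeta 3).
Proof.
  assert (Hz := zeta_series 3 ltac:(lra)).
  assert (Hodd : is_series (fun j => zeta_term 3 (2 * j + 1)%nat) (/ 8 * zeta 3)).
  { eapply is_series_ext; [|exact (is_series_scal (/ 8) _ _ Hz)].
    intros j. change (scal ?x ?y) with (x * y). rewrite !zeta_term_3, INR_S_odd.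
    as_real_eq. field. apply not_0_INR. lia. }
  replace (7 / 8 * zeta 3) with (zeta 3 - / 8 * zeta 3) by field.
  eapply is_series_ext; [|exact (even_index_series _ _ _ Hz Hodd)].
  intros j. cbv beta. rewrite zeta_term_3. replace (S (2 * j)) with (2 * j + 1)%nat by lia. reflexivity.
Qed.

Lemma odd_zeta'3 : is_series (fun j => ln (INR (2 * j + 1)) / INR (2 * j + 1) ^ 3)
                             (- (7 / 8 * zeta' 3 + ln 2 / 8 * zeta 3)).
Proof.
  assert (Hz' := zeta'_series). assert (Hz := zeta_series 3 ltac:(lra)).
  assert (Hodd : is_series (fun j => zeta_term_deriv 3 (2 * j + 1)%nat) (/ 8 * zeta' 3 + - (ln 2 / 8) * zeta 3)).
  { eapply is_series_ext;
      [|exact (is_series_plus _ _ _ _ (is_series_scal (/ 8) _ _ Hz') (is_series_scal (- (ln 2 / 8)) _ _ Hz))].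
    intros j. change (plus ?x ?y) with (x + y). change (scal ?x ?y) with (x * y).
    rewrite !zeta_term_deriv_3, zeta_term_3, INR_S_odd. assert (0 < INR (S j)) by (apply lt_0_INR; lia).
    rewrite ln_mult by lra. as_real_eq. field. lra. }
  replace (- (7 / 8 * zeta' 3 + ln 2 / 8 * zeta 3))
    with (-1 * (zeta' 3 - (/ 8 * zeta' 3 + - (ln 2 / 8) * zeta 3))) by field.
  eapply is_series_ext; [|exact (is_series_scal (-1) _ _ (even_index_series _ _ _ Hz' Hodd))].
  intros j. change (scal ?x ?y) with (x * y). cbv beta. rewrite zeta_term_deriv_3.
  replace (S (2 * j)) with (2 * j + 1)%nat by lia. as_real_eq. ring.
Qed.

Lemma int_real_part :
  int_0_oo (fun t => - (t * ln t) * artanh_exp t)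
    (- (1 - euler_gamma) * (7 / 8 * zeta 3) + - (7 / 8 * zeta' 3 + ln 2 / 8 * zeta 3)).
Proof.
  apply (int_0_oo_artanh_series (fun t => - (t * ln t)) 54
           (fun j => - ((1 - euler_gamma - ln (INR (2 * j + 1))) / (INR (2 * j + 1) * INR (2 * j + 1))))).
  - apply cont_pos_derivable. intros; auto_derive; lra.
  - lra.
  - (* [|t log t| e^{-t}(1+2t)/(2t) ≤ |log t| · 27/(1+t)³ · (1+t) ≤ 54/(√t (1+t))] *)
    intros t Ht. rewrite Rabs_Ropp, Rabs_mult, Rabs_right by lra.
    assert (L := abs_ln_le t Ht). assert (E := exp_neg_decay3 t ltac:(lra)).
    assert (Hs : 0 < sqrt t) by (apply sqrt_lt_R0; lra). assert (Ep := exp_pos (- t)).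
    assert (Hl := Rabs_pos (ln t)).
    replace (t * Rabs (ln t) * (exp (- t) * (1 + 2 * t) / (2 * t)))
      with (Rabs (ln t) * exp (- t) * (1 + 2 * t) / 2) by (field; lra).
    apply Rle_trans with ((2 * (1 + t) / sqrt t) * (27 / (1 + t) ^ 3) * (1 + 2 * t) / 2).
    { unfold Rdiv. apply Rmult_le_compat_r; [lra|]. apply Rmult_le_compat_r; [lra|].
      apply Rmult_le_compat; lra. }
    replace (54 / (sqrt t * (1 + t)))
      with ((2 * (1 + t) / sqrt t) * (27 / (1 + t) ^ 3) * (2 * (1 + t)) / 2) by (simpl; field; lra).
    unfold Rdiv. apply Rmult_le_compat_r; [lra|]. apply Rmult_le_compat_l; [|lra].
    assert (0 < / sqrt t) by (apply Rinv_0_lt_compat; lra).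
    assert (0 < / (1 + t) ^ 3) by (apply Rinv_0_lt_compat, pow_lt; lra).
    apply Rmult_le_pos; apply Rmult_le_pos; lra.
  - intros j. assert (Hk := INR_odd_pos j).
    refine (int_0_oo_congr _ _ _ _ _ _ (int_0_oo_scal _ (-1) _ _ (int_t_ln_exp_k _ Hk))).
    + intros; ring.
    + ring.
    + apply cont_pos_derivable. intros; auto_derive; lra.
  - eapply is_series_ext;
      [|exact (is_series_plus _ _ _ _ (is_series_scal (- (1 - euler_gamma)) _ _ odd_zeta3) odd_zeta'3)].
    intros j. change (plus ?x ?y) with (x + y). change (scal ?x ?y) with (x * y).
    assert (Hk := INR_odd_pos j). as_real_eq. field. lra.
Qed.

Lemma int_imaginary_part : int_0_oo (fun t => - PI * t * artanh_exp t) (- PI * (7 / 8 * zeta 3)).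
Proof.
  assert (HPI := PI_RGT_0).
  apply (int_0_oo_artanh_series (fun t => - PI * t) (27 * PI)
           (fun j => - PI / (INR (2 * j + 1) * INR (2 * j + 1)))).
  - apply cont_pos_derivable. intros; auto_derive; lra.
  - nra.
  - (* [π t e^{-t}(1+2t)/(2t) ≤ π · 27/(1+t)³ · (1+t) ≤ 27π/(√t (1+t))] *)
    intros t Ht. rewrite Rabs_mult, Rabs_Ropp, !Rabs_right by lra.
    assert (E := exp_neg_decay3 t ltac:(lra)).
    assert (Hs : 0 < sqrt t) by (apply sqrt_lt_R0; lra). assert (Ep := exp_pos (- t)).
    assert (Hst : sqrt t <= 1 + t).
    { destruct (Rle_dec t 1).
      - assert (sqrt t <= 1) by (rewrite <- sqrt_1; apply sqrt_le_1_alt; lra). lra.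
      - assert (Hss := sqrt_sqrt t ltac:(lra)). nra. }
    replace (PI * t * (exp (- t) * (1 + 2 * t) / (2 * t))) with (PI * exp (- t) * (1 + 2 * t) / 2)
      by (field; lra).
    apply Rle_trans with (PI * (27 / (1 + t) ^ 3) * (2 * (1 + t)) / 2).
    { unfold Rdiv. apply Rmult_le_compat_r; [lra|]. apply Rmult_le_compat; nra. }
    replace (PI * (27 / (1 + t) ^ 3) * (2 * (1 + t)) / 2) with (27 * PI / ((1 + t) * (1 + t)))
      by (simpl; field; lra).
    unfold Rdiv. apply Rmult_le_compat_l; [nra|]. apply Rinv_le_contravar; nra.
  - intros j. assert (Hk := INR_odd_pos j).
    refine (int_0_oo_congr _ _ _ _ _ _ (int_0_oo_scal _ (- PI) _ _ (int_t_exp_k _ Hk))).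
    + intros; ring.
    + field. lra.
    + apply cont_pos_derivable. intros; auto_derive; lra.
  - eapply is_series_ext; [|exact (is_series_scal (- PI) _ _ odd_zeta3)].
    intros j. change (scal ?x ?y) with (x * y). assert (Hk := INR_odd_pos j). as_real_eq. field. lra.
Qed.

(** ** Back to [(0,1)]: the substitution [x = e^{-t}] *)

Lemma RInt_exp_substitution (h : R -> R) a b : 0 < a <= b -> b < 1 ->
  (forall x, a <= x <= b -> continuous h x) ->
  RInt h a b = RInt (fun t => exp (- t) * h (exp (- t))) (- ln b) (- ln a).
Proof.
  intros Hab Hb1 Hh. set (g := fun t => exp (- t) * h (exp (- t))).
  assert (Hlog : ln a <= ln b) by (destruct (Req_dec a b) as [->|]; [lra|apply Rlt_le, ln_increasing; lra]).
  assert (Ea : exp (- - ln a) = a) by (rewrite Ropp_involutive; apply exp_ln; lra).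
  assert (Eb : exp (- - ln b) = b) by (rewrite Ropp_involutive; apply exp_ln; lra).
  assert (HC := is_RInt_comp h (fun t => exp (- t)) (fun t => - exp (- t)) (- ln b) (- ln a)).
  cbv beta in HC. rewrite Ea, Eb in HC.
  assert (Hin : forall x, Rmin (- ln b) (- ln a) <= x <= Rmax (- ln b) (- ln a) -> a <= exp (- x) <= b).
  { rewrite Rmin_left, Rmax_right by lra. intros x Hx. rewrite <- Ea, <- Eb.
    split; apply exp_le_mono; lra. }
  assert (Hopp : is_RInt (fun y => - g y) (- ln b) (- ln a) (RInt h b a)).
  { eapply is_RInt_ext; [|apply HC].
    - intros x _. unfold g. change (scal ?u ?v) with (u * v). as_real_eq. ring.
    - intros x Hx. apply Hh, Hin, Hx.
    - intros x _. split; [auto_derive; [auto|ring]|].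
      apply (ex_derive_continuous (fun t => - exp (- t))). auto_derive. auto. }
  apply is_RInt_opp in Hopp.
  rewrite <- (opp_RInt_swap h a b) in Hopp
    by (apply ex_RInt_cont; rewrite Rmin_left, Rmax_right by lra; exact Hh).
  rewrite opp_opp in Hopp. symmetry. apply is_RInt_unique. eapply is_RInt_ext; [|exact Hopp].
  intros x _. change (opp (opp (g x)) = g x). apply opp_opp.
Qed.

Lemma exp_substitution (f h : R -> R) l :
  (forall x, 0 < x < 1 -> f x = h x) -> (forall x, 0 < x < 1 -> continuous h x) ->
  int_0_oo (fun t => exp (- t) * h (exp (- t))) l ->
  is_RInt_gen f (at_right 0) (at_left 1) l.
Proof.
  intros Efh Hh Hint P [e He].
  destruct (int_0_oo_normal _ _ Hint e (cond_pos e)) as [d [Hd [M [HM HdM]]]].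
  assert (Hed : exp (- d) < 1) by (apply exp_neg_in_01; lra).
  assert (HMd : exp (- M) <= exp (- d)) by (apply exp_le_mono; lra).
  apply (Filter_prod _ _ _ (fun a => 0 < a < exp (- M)) (fun b => exp (- d) < b < 1)).
  - exists (mkposreal (exp (- M)) (exp_pos _)). intros y Hy Hpos.
    change (Rabs (y - 0) < exp (- M)) in Hy. rewrite Rminus_0_r in Hy.
    apply Rabs_lt_between in Hy. lra.
  - assert (Hp : 0 < 1 - exp (- d)) by lra. exists (mkposreal _ Hp). intros y Hy Hlt.
    change (Rabs (y - 1) < 1 - exp (- d)) in Hy. apply Rabs_lt_between in Hy. lra.
  - intros a b Ha Hb. simpl in *.
    assert (Hcont : forall x, a <= x <= b -> continuous h x) by (intros; apply Hh; lra).
    exists (RInt h a b). split.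
    + apply (is_RInt_ext h); [intros x Hx; rewrite Rmin_left, Rmax_right in Hx by lra; symmetry; apply Efh; lra|].
      apply (RInt_correct (V := R_CompleteNormedModule)), ex_RInt_cont.
      rewrite Rmin_left, Rmax_right by lra. exact Hcont.
    + apply He. rewrite (RInt_exp_substitution h a b) by (auto; lra). apply HdM.
      * assert (ln b < 0) by (rewrite <- ln_1; apply ln_increasing; lra).
        assert (- d < ln b) by (rewrite <- (ln_exp (- d)); apply ln_increasing; [apply exp_pos|lra]). lra.
      * assert (ln a < - M) by (rewrite <- (ln_exp (- M)); apply ln_increasing; lra). lra.
Qed.

Lemma is_RInt_gen_pair {Fa Fb : (R -> Prop) -> Prop} {FFa : Filter Fa} {FFb : Filter Fb}
  (f : R -> C) l1 l2 :
  is_RInt_gen (fun x => fst (f x)) Fa Fb l1 -> is_RInt_gen (fun x => snd (f x)) Fa Fb l2 ->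
  is_RInt_gen f Fa Fb (l1, l2).
Proof.
  intros H1 H2 P [e He].
  assert (E1 := H1 (ball l1 e) (locally_ball l1 e)).
  assert (E2 := H2 (ball l2 e) (locally_ball l2 e)).
  unfold filtermapi in E1, E2 |- *.
  generalize (filter_and _ _ E1 E2). apply filter_imp.
  intros ab [[y1 [Hy1 Hb1]] [y2 [Hy2 Hb2]]]. exists (y1, y2). split.
  - exact (is_RInt_fct_extend_pair f _ _ y1 y2 Hy1 Hy2).
  - apply He. split; assumption.
Qed.

Lemma integrand_parts x : 0 < x < 1 ->
  fst (integrand x) = ln x * artanh x / x * ln (- ln x) /\
  snd (integrand x) = ln x * artanh x / x * PI.
Proof.
  intros Hx. assert (ln x < 0) by (rewrite <- ln_1; apply ln_increasing; lra).
  unfold integrand, clog_real. destruct (Rlt_dec 0 (ln x)); [lra|]. simpl. split; ring.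
Qed.

Lemma continuous_artanh_ln_over x : 0 < x < 1 ->
  continuous (fun x => ln x * artanh x / x) x.
Proof.
  intros Hx. apply (ex_derive_continuous (fun x => ln x * artanh x / x)). unfold artanh. auto_derive.
  repeat split; try lra. apply Rmult_lt_0_compat; [lra|]. apply Rinv_0_lt_compat; lra.
Qed.

Lemma exp_substituted_integrand w t :
  exp (- t) * (ln (exp (- t)) * artanh (exp (- t)) / exp (- t) * w) = - t * w * artanh_exp t.
Proof. rewrite ln_exp. unfold artanh_exp. assert (Hp := exp_pos (- t)). field. lra. Qed.

Theorem mainTheorem13 :
  is_RInt_gen integrand (at_right 0) (at_left 1)
    (Cmult (RtoC (/ 8))
       (Cplus (RtoC (-7 * zeta' 3))
          (Cmult (RtoC (zeta 3))
             ((-7 + 7 * euler_gamma - ln 2, - 7 * PI) : C)))).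
Proof.
  replace (Cmult _ _) with
    ((- (1 - euler_gamma) * (7 / 8 * zeta 3) + - (7 / 8 * zeta' 3 + ln 2 / 8 * zeta 3),
      - PI * (7 / 8 * zeta 3)) : C)
    by (unfold Cmult, Cplus, RtoC; simpl; f_equal; field).
  apply is_RInt_gen_pair.
  - apply (exp_substitution _ (fun x => ln x * artanh x / x * ln (- ln x)));
      [intros; apply integrand_parts; auto| |].
    + intros x Hx. apply (continuous_mult (fun x => ln x * artanh x / x));
        [apply continuous_artanh_ln_over; auto|].
      apply (ex_derive_continuous (fun x => ln (- ln x))). auto_derive.
      assert (ln x < 0) by (rewrite <- ln_1; apply ln_increasing; lra). repeat split; lra.
    + refine (int_0_oo_congr _ _ _ _ _ eq_refl int_real_part). intros t Ht.
      cbv beta. rewrite exp_substituted_integrand, ln_exp, Ropp_involutive. ring.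
  - apply (exp_substitution _ (fun x => ln x * artanh x / x * PI));
      [intros; apply integrand_parts; auto| |].
    + intros x Hx. apply (continuous_mult (fun x => ln x * artanh x / x));
        [apply continuous_artanh_ln_over; auto|apply continuous_const].
    + refine (int_0_oo_congr _ _ _ _ _ eq_refl int_imaginary_part). intros t Ht.
      cbv beta. rewrite exp_substituted_integrand. ring.
Qed.
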